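(* In the ladder model, the density $\rho_\infty$ of the stationary distribution of $(\Delta_n)_{n\ge0}$ satisfies (i) the integral equations $$\rho_\infty(d)=e^{d}\int_{-\infty}^{d}\rho_\infty(\delta)\,d\delta+e^{2d}\int_{d}^{\infty}\rho_\infty(\delta)e^{-\delta}\,d\delta\quad (d<0),$$ $$\rho_\infty(d)=e^{-2d}\int_{-\infty}^{d}\rho_\infty(\delta)e^{\delta}\,d\delta+e^{-d}\int_{d}^{\infty}\rho_\infty(\delta)\,d\delta\quad (d\ge0);$$ (ii) $\rho_\infty$ is even: $\rho_\infty(d)=\rho_\infty(-d)$ for all $d\in\mathbb{R}$.
   Context: Ladder model $\mathcal{G}^{\{\mathcal{X},\mathcal{Y},\mathcal{Z}\}}$: for $n\ge0$, $G_n$ has vertex set $\{0,\dots,n\}\times\{0,1\}$ and edges: for $1\le i\le n$, an edge with weight $X_i$ joining $(i-1,0)$ and $(i,0)$, an edge with weight $Y_i$ joining $(i-1,1)$ and $(i,1)$; for $0\le i\le n$, an edge with weight $Z_i$ joining $(i,0)$ and $(i,1)$. All weights are independent standard exponential random variables. Path weight = sum of edge weights. $l_n$ ($l_n'$) is the minimal weight of a path in $G_n$ from $(0,0)$ to $(n,0)$ (to $(n,1)$), and $\Delta_n=l_n'-l_n$; $(\Delta_n)$ is an ergodic Markov chain given by $\Delta_0$ standard exponential and $\Delta_n=\min\{\Delta_{n-1}+Y_n,X_n+Z_n\}-\min\{X_n,\Delta_{n-1}+Y_n+Z_n\}$, and $\rho_\infty$ is the density of its unique stationary distribution. *)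

From Stdlib Require Import Reals.
Open Scope R_scope.

Definition Dstep (d x y z : R) : R :=
  Rmin (d + y) (x + z) - Rmin x (d + y + z).

Definition is_RInt (f : R -> R) (a b l : R) : Prop :=
  exists pr : Riemann_integrable f a b, RiemannInt pr = l.

Definition is_int_from (f : R -> R) (a l : R) : Prop :=
  forall eps, 0 < eps -> exists M, forall b, M <= b ->
    exists v, is_RInt f a b v /\ Rabs (v - l) < eps.

Definition is_int_to (f : R -> R) (b l : R) : Prop :=
  forall eps, 0 < eps -> exists M, forall a, a <= M ->
    exists v, is_RInt f a b v /\ Rabs (v - l) < eps.

Definition is_int_R (f : R -> R) (l : R) : Prop :=
  forall eps, 0 < eps -> exists M, forall a b, a <= - M -> M <= b ->
    exists v, is_RInt f a b v /\ Rabs (v - l) < eps.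

(** E[phi(X,Y,Z)] = v for X,Y,Z i.i.d. standard exponential,
    written as an iterated improper integral with density e^{-x} e^{-y} e^{-z}. *)
Definition exp_expect3 (phi : R -> R -> R -> R) (v : R) : Prop :=
  exists (h2 : R -> R -> R) (h1 : R -> R),
    (forall x y, is_int_from (fun z => phi x y z * exp (- z)) 0 (h2 x y)) /\
    (forall x, is_int_from (fun y => h2 x y * exp (- y)) 0 (h1 x)) /\
    is_int_from (fun x => h1 x * exp (- x)) 0 v.

Definition prob_density (rho : R -> R) : Prop :=
  (forall d, 0 <= rho d) /\ is_int_R rho 1.

(** rho is the density of a stationary distribution of the chain:
    if Delta_0 has density rho and X,Y,Z are independent standard exponentials
    independent of Delta_0, then Dstep Delta_0 X Y Z has the same law, tested
    against all continuous compactly supported g: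
      int rho(delta) E[g(Dstep delta X Y Z)] d delta = int rho(delta) g(delta) d delta. *)
Definition stationary_density (rho : R -> R) : Prop :=
  forall g : R -> R, continuity g ->
    (exists K, forall t, K < Rabs t -> g t = 0) ->
    exists Eg : R -> R,
      (forall delta, exp_expect3 (fun x y z => g (Dstep delta x y z)) (Eg delta)) /\
      exists L, is_int_R (fun delta => rho delta * Eg delta) L /\
                is_int_R (fun delta => rho delta * g delta) L.

(* For a continuous g vanishing outside a compact
      interval [l, r] with 0 < l (resp. r < 0), the expectation
      E g(Dstep d X Y Z) is computed in closed form by integrating out Z,
      then Y, then X; each layer is an explicit primitive (sections
      [PositiveTest], [NegativeTest]).
   2. Integral equations.  An integration by parts turns stationarity into
      int g (K - rho) = 0, where K is the right-hand side of the claimed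
      equation ([orthogonal_of_primitive], [orthogonal_neg], [orthogonal_pos]).
      As g is an arbitrary bump, K = rho away from 0 ([vanish_of_orthogonal]),
      and at 0 by continuity.
   3. Symmetry.  On (-oo, 0) both rho and d |-> rho (-d) solve the system
      f = e^d A + e^{2d} B,  A' = f,  B' = - e^{-d} f, with A -> 0 at -oo and
      the bounds enjoyed by tails of a density ([half_line_system]).  Either
      A > 0, and then a Wronskian argument shows that any other solution is
      proportional to f, or f vanishes identically; solutions agreeing at 0
      therefore coincide ([system_unique]), which gives [rho_even].  Exponentials are written in the affine form exp (c * t + 0), so
   that a single continuity and derivative lemma covers all of them. *)

From Pilot Require Import Defs.
From Stdlib Require Import Reals Lra Classical FunctionalExtensionality.
From Coquelicot Require Import Coquelicot.
Open Scope R_scope.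

Implicit Types (f g h F G : R -> R) (a b c d x y l r s t u v : R).

(** * Limits at +oo and -oo *)

Definition lim_pinf F l : Prop :=
  forall eps, 0 < eps -> exists M, forall b, M <= b -> Rabs (F b - l) < eps.
Definition lim_minf F l : Prop :=
  forall eps, 0 < eps -> exists M, forall a, a <= M -> Rabs (F a - l) < eps.

Lemma eq_of_close x y : (forall eps, 0 < eps -> Rabs (x - y) < eps) -> x = y.
Proof.
  intros H. destruct (Req_dec x y) as [e|n]; auto.
  assert (Hd : 0 < Rabs (x - y)) by (apply Rabs_pos_lt; lra).
  specialize (H _ Hd). lra.
Qed.

Lemma lim_pinf_unique F l1 l2 : lim_pinf F l1 -> lim_pinf F l2 -> l1 = l2.
Proof.
  intros H1 H2. apply eq_of_close. intros eps He.
  destruct (H1 (eps/2)) as [M1 HM1]; [lra|]. destruct (H2 (eps/2)) as [M2 HM2]; [lra|].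
  specialize (HM1 (Rmax M1 M2) (Rmax_l _ _)). specialize (HM2 (Rmax M1 M2) (Rmax_r _ _)).
  apply Rabs_def2 in HM1. apply Rabs_def2 in HM2. apply Rabs_def1; lra.
Qed.

Lemma lim_minf_unique F l1 l2 : lim_minf F l1 -> lim_minf F l2 -> l1 = l2.
Proof.
  intros H1 H2. apply eq_of_close. intros eps He.
  destruct (H1 (eps/2)) as [M1 HM1]; [lra|]. destruct (H2 (eps/2)) as [M2 HM2]; [lra|].
  specialize (HM1 (Rmin M1 M2) (Rmin_l _ _)). specialize (HM2 (Rmin M1 M2) (Rmin_r _ _)).
  apply Rabs_def2 in HM1. apply Rabs_def2 in HM2. apply Rabs_def1; lra.
Qed.

Lemma lim_pinf_ext F G l :
  (exists M, forall b, M <= b -> F b = G b) -> lim_pinf F l -> lim_pinf G l.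
Proof.
  intros [M0 HM0] H eps He. destruct (H eps He) as [M HM]. exists (Rmax M M0). intros b Hb.
  rewrite <- HM0. apply HM. all: eapply Rle_trans; [|exact Hb]; auto using Rmax_l, Rmax_r.
Qed.

Lemma lim_minf_ext F G l :
  (exists M, forall b, b <= M -> F b = G b) -> lim_minf F l -> lim_minf G l.
Proof.
  intros [M0 HM0] H eps He. destruct (H eps He) as [M HM]. exists (Rmin M M0). intros b Hb.
  rewrite <- HM0. apply HM. all: eapply Rle_trans; [exact Hb|]; auto using Rmin_l, Rmin_r.
Qed.

Lemma lim_pinf_const c : lim_pinf (fun _ => c) c.
Proof. intros eps He. exists 0. intros. rewrite Rminus_eq_0, Rabs_R0. lra. Qed.

Lemma lim_minf_const c : lim_minf (fun _ => c) c.
Proof. intros eps He. exists 0. intros. rewrite Rminus_eq_0, Rabs_R0. lra. Qed.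

Lemma lim_pinf_plus F G l1 l2 :
  lim_pinf F l1 -> lim_pinf G l2 -> lim_pinf (fun x => F x + G x) (l1 + l2).
Proof.
  intros H1 H2 eps He.
  destruct (H1 (eps/2)) as [M1 HM1]; [lra|]. destruct (H2 (eps/2)) as [M2 HM2]; [lra|].
  exists (Rmax M1 M2). intros b Hb.
  assert (A1 := HM1 b (Rle_trans _ _ _ (Rmax_l _ _) Hb)).
  assert (A2 := HM2 b (Rle_trans _ _ _ (Rmax_r _ _) Hb)).
  apply Rabs_def2 in A1. apply Rabs_def2 in A2. apply Rabs_def1; lra.
Qed.

Lemma lim_pinf_scal c F l : lim_pinf F l -> lim_pinf (fun x => c * F x) (c * l).
Proof.
  intros H eps He. pose proof (Rabs_pos c) as Hc.
  destruct (H (eps / (Rabs c + 1))) as [M HM]; [apply Rdiv_lt_0_compat; lra|].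
  exists M. intros b Hb. specialize (HM b Hb).
  replace (c * F b - c * l) with (c * (F b - l)) by ring. rewrite Rabs_mult.
  pose proof (Rabs_pos (F b - l)).
  apply Rle_lt_trans with (Rabs c * (eps / (Rabs c + 1))); [apply Rmult_le_compat_l; lra|].
  apply Rlt_le_trans with ((Rabs c + 1) * (eps / (Rabs c + 1))).
  - apply Rmult_lt_compat_r; [apply Rdiv_lt_0_compat|]; lra.
  - right. field. lra.
Qed.

Lemma lim_pinf_addc F l c : lim_pinf F l -> lim_pinf (fun x => F x + c) (l + c).
Proof.
  intros H eps He. destruct (H eps He) as [M HM]. exists M. intros a Ha.
  replace (F a + c - (l + c)) with (F a - l) by ring. auto.
Qed.

Lemma lim_minf_addc F l c : lim_minf F l -> lim_minf (fun x => F x + c) (l + c).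
Proof.
  intros H eps He. destruct (H eps He) as [M HM]. exists M. intros a Ha.
  replace (F a + c - (l + c)) with (F a - l) by ring. auto.
Qed.

Lemma lim_minf_of_pinf F l : lim_pinf (fun x => F (- x)) l -> lim_minf F l.
Proof.
  intros H eps He. destruct (H eps He) as [M HM]. exists (- M). intros a Ha.
  replace a with (- - a) by ring. apply HM. lra.
Qed.

Lemma lim_pinf_of_minf F l : lim_minf F l -> lim_pinf (fun x => F (- x)) l.
Proof. intros H eps He. destruct (H eps He) as [M HM]. exists (- M). intros b Hb. apply HM. lra. Qed.

Lemma lim_minf_scal c F l : lim_minf F l -> lim_minf (fun x => c * F x) (c * l).
Proof. intros H. apply lim_minf_of_pinf, (lim_pinf_scal c (fun x => F (- x))), lim_pinf_of_minf, H. Qed.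

(* Shifted and reflected arguments, as produced by the substitutions s = b + c
   and s = c - b. *)
Lemma lim_pinf_shift F l c : lim_pinf F l -> lim_pinf (fun b => F (b + c)) l.
Proof. intros H eps He. destruct (H eps He) as [M HM]. exists (M - c). intros b Hb. apply HM. lra. Qed.

Lemma lim_minf_shift F l c : lim_minf F l -> lim_pinf (fun b => F (c - b)) l.
Proof. intros H eps He. destruct (H eps He) as [M HM]. exists (c - M). intros b Hb. apply HM. lra. Qed.

Lemma lim_exp_neg : lim_pinf (fun x => exp (- x)) 0.
Proof.
  intros eps He. exists (1 - ln eps). intros b Hb.
  rewrite Rminus_0_r, Rabs_pos_eq by (left; apply exp_pos).
  rewrite <- (exp_ln eps He). apply exp_increasing. lra.
Qed.

Lemma lim_pinf_le F l a m : lim_pinf F l -> (forall x, a <= x -> F x <= m) -> l <= m.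
Proof.
  intros H Hb. destruct (Rle_dec l m) as [h|h]; auto. exfalso.
  destruct (H (l - m)) as [M HM]; [lra|]. specialize (HM (Rmax M a) (Rmax_l _ _)).
  specialize (Hb (Rmax M a) (Rmax_r _ _)). apply Rabs_def2 in HM. lra.
Qed.

Lemma lim_pinf_ge F l a m : lim_pinf F l -> (forall x, a <= x -> m <= F x) -> m <= l.
Proof.
  intros H Hb. destruct (Rle_dec m l) as [h|h]; auto. exfalso.
  destruct (H (m - l)) as [M HM]; [lra|]. specialize (HM (Rmax M a) (Rmax_l _ _)).
  specialize (Hb (Rmax M a) (Rmax_r _ _)). apply Rabs_def2 in HM. lra.
Qed.

Lemma lim_minf_ge F l a m : lim_minf F l -> (forall x, x <= a -> m <= F x) -> m <= l.
Proof.
  intros H Hb. destruct (Rle_dec m l) as [h|h]; auto. exfalso.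
  destruct (H (m - l)) as [M HM]; [lra|]. specialize (HM (Rmin M a) (Rmin_l _ _)).
  specialize (Hb (Rmin M a) (Rmin_r _ _)). apply Rabs_def2 in HM. lra.
Qed.

Lemma monotone_lim_pinf F a m :
  (forall x y, a <= x -> x <= y -> F x <= F y) -> (forall x, a <= x -> F x <= m) ->
  exists l, lim_pinf F l /\ (forall x, a <= x -> F x <= l).
Proof.
  intros Hm Hb.
  set (E := fun y => exists b, a <= b /\ y = F b).
  assert (Hbd : bound E) by (exists m; intros y [b [Hab ->]]; auto).
  assert (Hne : exists y, E y) by (exists (F a); exists a; split; [lra|auto]).
  destruct (completeness E Hbd Hne) as [l [Hub Hlub]].
  exists l. split.
  - intros eps He.
    destruct (classic (exists b, a <= b /\ l - eps < F b)) as [[b0 [Hb0 Hlt]]|Hn].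
    + exists b0. intros b Hbb. assert (F b0 <= F b) by (apply Hm; lra).
      assert (F b <= l) by (apply Hub; exists b; split; [lra|auto]).
      rewrite Rabs_left1 by lra. lra.
    + exfalso. assert (l <= l - eps); [|lra]. apply Hlub. intros y [b [Hab ->]].
      destruct (Rle_dec (F b) (l - eps)); auto. exfalso; apply Hn; exists b; split; auto; lra.
  - intros x Hx. apply Hub. exists x; auto.
Qed.

(** * Continuity, derivatives and Riemann integrals on R *)

Definition Cont f : Prop := forall x, continuous f x.

Lemma Cont_of_continuity f : continuity f -> Cont f.
Proof. intros H x. apply continuity_pt_filterlim, H. Qed.

Lemma continuity_of_Cont f : Cont f -> continuity f.
Proof. intros H x. apply continuity_pt_filterlim, H. Qed.

Lemma Cont_ext f g : (forall x, f x = g x) -> Cont f -> Cont g.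
Proof. intros H Hf. replace g with f; auto. apply functional_extensionality; auto. Qed.

Lemma Cont_cst c : Cont (fun _ => c).
Proof. intros x. apply continuous_const. Qed.

Lemma Cont_id : Cont (fun x => x).
Proof. intros x. apply continuous_id. Qed.

Lemma Cont_mul f g : Cont f -> Cont g -> Cont (fun x => f x * g x).
Proof. intros Hf Hg x. apply (continuous_mult f g x); auto. Qed.

Lemma Cont_plus f g : Cont f -> Cont g -> Cont (fun x => f x + g x).
Proof. intros Hf Hg x. apply (continuous_plus f g x); auto. Qed.

Lemma Cont_opp f : Cont f -> Cont (fun x => - f x).
Proof. intros Hf x. apply (continuous_opp f x); auto. Qed.

Lemma Cont_minus f g : Cont f -> Cont g -> Cont (fun x => f x - g x).
Proof. intros Hf Hg. apply Cont_plus; auto. apply Cont_opp; auto. Qed.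

Lemma Cont_comp f g : Cont f -> Cont g -> Cont (fun x => f (g x)).
Proof. intros Hf Hg x. apply (continuous_comp g f x); auto. Qed.

Lemma Cont_of_derive f f' : (forall x, is_derive f x (f' x)) -> Cont f.
Proof.
  intros H x. apply (ex_derive_continuous (K:=R_AbsRing) (V:=R_NormedModule)).
  eexists; apply H.
Qed.

Lemma d_val (f : R -> R) (x l1 l2 : R) : is_derive f x l1 -> l1 = l2 -> is_derive f x l2.
Proof. intros H ->; auto. Qed.

Lemma d_ext (f g : R -> R) (x l : R) : (forall t, f t = g t) -> is_derive f x l -> is_derive g x l.
Proof. intros H. apply is_derive_ext. auto. Qed.

Lemma d_cst (c x : R) : is_derive (fun _ : R => c) x 0.
Proof. apply (is_derive_const c x). Qed.

Lemma d_plus f g x df dg :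
  is_derive f x df -> is_derive g x dg -> is_derive (fun t => f t + g t) x (df + dg).
Proof. intros H1 H2. apply (is_derive_plus f g x df dg H1 H2). Qed.

Lemma d_opp f x df : is_derive f x df -> is_derive (fun t => - f t) x (- df).
Proof. intros H1. apply (is_derive_opp f x df H1). Qed.

Lemma d_minus f g x df dg :
  is_derive f x df -> is_derive g x dg -> is_derive (fun t => f t - g t) x (df - dg).
Proof. intros H1 H2. apply (is_derive_minus f g x df dg H1 H2). Qed.

Lemma d_mul f g x df dg :
  is_derive f x df -> is_derive g x dg -> is_derive (fun t => f t * g t) x (df * g x + f x * dg).
Proof. intros H1 H2. apply (is_derive_mult f g x df dg H1 H2). intros; apply Rmult_comm. Qed.

Lemma d_comp f g x df dg :
  is_derive f (g x) df -> is_derive g x dg -> is_derive (fun t => f (g t)) x (dg * df).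
Proof. intros H1 H2. apply (is_derive_comp f g x df dg H1 H2). Qed.

Lemma d_lin (c d x : R) : is_derive (fun t => c * t + d) x c.
Proof. auto_derive; auto; ring. Qed.

Lemma d_expl (c d x : R) : is_derive (fun t => exp (c * t + d)) x (c * exp (c * x + d)).
Proof. auto_derive; auto; ring. Qed.

Lemma d_unique (f : R -> R) (x l1 l2 : R) : is_derive f x l1 -> is_derive f x l2 -> l1 = l2.
Proof. intros H1 H2. apply is_derive_unique in H1. apply is_derive_unique in H2. congruence. Qed.

Lemma Cont_compl f c d : Cont f -> Cont (fun t => f (c * t + d)).
Proof.
  intros H. apply (Cont_comp f (fun t => c * t + d)); auto.
  apply (Cont_of_derive _ (fun _ => c)). intros; apply d_lin.
Qed.

Lemma Cont_expl c d : Cont (fun x => exp (c * x + d)).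
Proof. apply (Cont_of_derive _ _ (d_expl c d)). Qed.

Lemma Cont_mul_expl f c : Cont f -> Cont (fun t => f t * exp (c * t + 0)).
Proof. intros Hf. apply Cont_mul; auto. apply Cont_expl. Qed.

Lemma Cont_max0 f : Cont f -> Cont (fun x => Rmax 0 (f x)).
Proof.
  intros Hf. apply (Cont_ext (fun x => (f x + Rabs (f x)) * / 2)).
  - intros y. unfold Rmax. destruct (Rle_dec 0 (f y)).
    + rewrite Rabs_pos_eq; lra.
    + rewrite Rabs_left; lra.
  - apply Cont_mul; [|apply Cont_cst]. apply Cont_plus; auto.
    intros x. apply continuous_Rabs_comp, Hf.
Qed.

Lemma cont_left_ge h c : Cont h -> (forall d, -1 < d < 0 -> c <= h d) -> c <= h 0.
Proof.
  intros Hh H. destruct (Rle_dec c (h 0)) as [e|e]; auto. exfalso.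
  assert (Hc := Hh 0). apply continuity_pt_filterlim in Hc.
  destruct (Hc (c - h 0)) as [alp [Halp Hal]]; [lra|].
  assert (Hm : 0 < Rmin alp 1) by (apply Rmin_pos; lra).
  pose proof (Rmin_l alp 1). pose proof (Rmin_r alp 1).
  set (d := - Rmin alp 1 / 2).
  assert (Hb : D_x no_cond 0 d /\ dist R_met d 0 < alp).
  { split; [split; [constructor|unfold d; lra]|].
    simpl. unfold R_dist. rewrite Rminus_0_r, Rabs_left by (unfold d; lra). unfold d. lra. }
  specialize (Hal d Hb). simpl in Hal. unfold R_dist in Hal. apply Rabs_def2 in Hal.
  specialize (H d ltac:(unfold d; lra)). lra.
Qed.

Lemma cont_left_eq h1 h2 : Cont h1 -> Cont h2 -> (forall d, -1 < d < 0 -> h1 d = h2 d) -> h1 0 = h2 0.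
Proof.
  intros H1 H2 H.
  assert (0 <= h1 0 - h2 0).
  { apply (cont_left_ge (fun t => h1 t - h2 t)); [apply Cont_minus; auto|].
    intros d Hd. rewrite H; auto. lra. }
  assert (0 <= h2 0 - h1 0).
  { apply (cont_left_ge (fun t => h2 t - h1 t)); [apply Cont_minus; auto|].
    intros d Hd. rewrite H; auto. lra. }
  lra.
Qed.

Lemma exp_le_mono x y : x <= y -> exp x <= exp y.
Proof. intros [H|H]; [left; apply exp_increasing; auto|rewrite H; lra]. Qed.

Lemma exp_le_1 x : x <= 0 -> exp x <= 1.
Proof. intros H. rewrite <- exp_0. apply exp_le_mono, H. Qed.

Lemma Defs_is_RInt_iff f a b l : Defs.is_RInt f a b l <-> is_RInt f a b l.
Proof.
  split.
  - intros [pr Hpr]. assert (He := ex_RInt_Reals_1 f a b pr).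
    rewrite <- Hpr, <- (RInt_Reals f a b pr). exact (RInt_correct f a b He).
  - intros H. assert (He : ex_RInt f a b) by (eexists; eauto).
    exists (ex_RInt_Reals_0 f a b He). rewrite <- RInt_Reals.
    now apply is_RInt_unique.
Qed.

Lemma ex_RInt_of_Cont f a b : Cont f -> ex_RInt f a b.
Proof. intros H. apply (ex_RInt_continuous (V:=R_CompleteNormedModule)). intros; apply H. Qed.

Lemma is_RInt_of_Cont f a b : Cont f -> is_RInt f a b (RInt f a b).
Proof. intros H. apply (RInt_correct f a b). apply ex_RInt_of_Cont; auto. Qed.

Lemma d_prim f a x : Cont f -> is_derive (fun t => RInt f a t) x (f x).
Proof.
  intros H. apply (is_derive_RInt f _ a x); [|apply H].
  apply filter_forall. intros; apply is_RInt_of_Cont; auto.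
Qed.

Lemma d_primL f b x : Cont f -> is_derive (fun t => RInt f t b) x (- f x).
Proof.
  intros H. apply (is_derive_RInt' f _ x b); [|apply H].
  apply filter_forall. intros; apply is_RInt_of_Cont; auto.
Qed.

Lemma ftc F f a b : (forall x, is_derive F x (f x)) -> Cont f -> is_RInt f a b (F b - F a).
Proof. intros H1 H2. apply (is_RInt_derive (V:=R_CompleteNormedModule) F f a b); intros; auto. Qed.

Lemma RInt_val f a b l : is_RInt f a b l -> RInt f a b = l.
Proof. intros H. exact (is_RInt_unique f a b l H). Qed.

Lemma isR_unique f a b l1 l2 : is_RInt f a b l1 -> is_RInt f a b l2 -> l1 = l2.
Proof. intros H1 H2. rewrite <- (RInt_val _ _ _ _ H1). apply RInt_val; auto. Qed.

Lemma isR_ext f g a b l :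
  (forall x, Rmin a b < x < Rmax a b -> f x = g x) -> is_RInt f a b l -> is_RInt g a b l.
Proof. intros. exact (is_RInt_ext f g a b l H H0). Qed.

Lemma isR_chasles f a b c l1 l2 : is_RInt f a b l1 -> is_RInt f b c l2 -> is_RInt f a c (l1 + l2).
Proof. intros. exact (is_RInt_Chasles f a b c l1 l2 H H0). Qed.

Lemma isR_plus f g a b l1 l2 :
  is_RInt f a b l1 -> is_RInt g a b l2 -> is_RInt (fun x => f x + g x) a b (l1 + l2).
Proof. intros. exact (is_RInt_plus f g a b l1 l2 H H0). Qed.

Lemma isR_minus f g a b l1 l2 :
  is_RInt f a b l1 -> is_RInt g a b l2 -> is_RInt (fun x => f x - g x) a b (l1 - l2).
Proof. intros. exact (is_RInt_minus f g a b l1 l2 H H0). Qed.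

Lemma isR_scal c f a b l : is_RInt f a b l -> is_RInt (fun x => c * f x) a b (c * l).
Proof. intros. exact (is_RInt_scal f a b c l H). Qed.

Lemma RInt_chasles f a b c : Cont f -> RInt f a b + RInt f b c = RInt f a c.
Proof. intros H. symmetry. apply RInt_val. apply (isR_chasles f a b c); apply is_RInt_of_Cont; auto. Qed.

Lemma RInt_swap f a b : Cont f -> RInt f a b = - RInt f b a.
Proof.
  intros H. rewrite <- (opp_RInt_swap (V:=R_CompleteNormedModule)) by (apply ex_RInt_of_Cont; auto).
  reflexivity.
Qed.

Lemma isR_zero f a b : (forall x, Rmin a b < x < Rmax a b -> f x = 0) -> is_RInt f a b 0.
Proof.
  intros H. apply (is_RInt_ext (fun _ => 0)); [intros x Hx; symmetry; auto|].
  assert (H0 := ftc (fun _ => 0) (fun _ => 0) a b (fun x => is_derive_const 0 x) (Cont_cst 0)).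
  rewrite Rminus_0_r in H0. exact H0.
Qed.

Lemma isR_supp f a b l r : Cont f -> (forall x, x <= l \/ r <= x -> f x = 0) ->
  a <= l -> l <= r -> r <= b -> is_RInt f a b (RInt f l r).
Proof.
  intros Hc Hz H1 H2 H3.
  replace (RInt f l r) with (0 + (RInt f l r + 0)) by ring.
  apply (isR_chasles _ a l b).
  - apply isR_zero. intros x Hx. apply Hz. left.
    assert (Rmax a l <= l) by (apply Rmax_lub; lra). lra.
  - apply (isR_chasles _ l r b); [apply is_RInt_of_Cont; auto|]. apply isR_zero. intros x Hx. apply Hz. right.
    assert (r <= Rmin r b) by (apply Rmin_glb; lra). lra.
Qed.

Lemma RInt_ge0 f a b : Cont f -> a <= b -> (forall x, 0 <= f x) -> 0 <= RInt f a b.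
Proof. intros Hc Hab H. apply RInt_ge_0; auto. apply ex_RInt_of_Cont; auto. Qed.

Lemma RInt_mono f g a b : Cont f -> Cont g -> a <= b ->
  (forall x, a <= x <= b -> f x <= g x) -> RInt f a b <= RInt g a b.
Proof. intros Hf Hg Hab H. apply RInt_le; auto; try apply ex_RInt_of_Cont; auto. intros; apply H; lra. Qed.

Lemma RInt_sub_int f a b a' b' : Cont f -> (forall x, 0 <= f x) ->
  a' <= a -> a <= b -> b <= b' -> RInt f a b <= RInt f a' b'.
Proof.
  intros Hc H0 H1 H2 H3.
  rewrite <- (RInt_chasles f a' a b') by auto. rewrite <- (RInt_chasles f a b b') by auto.
  pose proof (RInt_ge0 f a' a Hc H1 H0). pose proof (RInt_ge0 f b b' Hc H3 H0). lra.
Qed.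

Lemma RInt_pos_lt f a b : Cont f -> a < b -> (forall x, a < x < b -> 0 < f x) -> 0 < RInt f a b.
Proof.
  intros Hc Hab H.
  rewrite <- (RInt_val (fun _ => 0) a b 0) by (apply isR_zero; auto).
  apply RInt_lt; auto. intros; apply continuous_const.
Qed.

(** * Improper integrals *)

Lemma int_from_of_lim f a m F l :
  (forall b, m <= b -> is_RInt f a b (F b)) -> lim_pinf F l -> is_int_from f a l.
Proof.
  intros HF HL eps Heps. destruct (HL eps Heps) as [M HM]. exists (Rmax M m). intros b Hb.
  exists (F b). split.
  - apply Defs_is_RInt_iff, HF. eapply Rle_trans; [apply Rmax_r|exact Hb].
  - apply HM. eapply Rle_trans; [apply Rmax_l|exact Hb].
Qed.

Lemma int_to_of_lim f b F l :
  (forall a, a <= b -> is_RInt f a b (F a)) -> lim_minf F l -> is_int_to f b l.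
Proof.
  intros HF HL eps Heps. destruct (HL eps Heps) as [M HM]. exists (Rmin M b). intros a Ha.
  exists (F a). split.
  - apply Defs_is_RInt_iff, HF. eapply Rle_trans; [exact Ha|apply Rmin_r].
  - apply HM. eapply Rle_trans; [exact Ha|apply Rmin_l].
Qed.

Lemma int_from_unique f a l1 l2 : is_int_from f a l1 -> is_int_from f a l2 -> l1 = l2.
Proof.
  assert (Hlim : forall l, is_int_from f a l -> lim_pinf (fun b => RInt f a b) l).
  { intros l H eps Heps. destruct (H eps Heps) as [M HM]. exists M. intros b Hb.
    destruct (HM b Hb) as [v [Hv1 Hv2]]. apply Defs_is_RInt_iff in Hv1.
    now rewrite (RInt_val _ _ _ _ Hv1). }
  intros H1 H2. eapply lim_pinf_unique; apply Hlim; eauto.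
Qed.

Lemma is_int_R_ext f1 f2 L : (forall x, f1 x = f2 x) -> is_int_R f1 L -> is_int_R f2 L.
Proof. intros H. replace f2 with f1; auto. apply functional_extensionality; auto. Qed.

Lemma is_int_from_ext f1 f2 a L : (forall x, f1 x = f2 x) -> is_int_from f1 a L -> is_int_from f2 a L.
Proof. intros H. replace f2 with f1; auto. apply functional_extensionality; auto. Qed.

Lemma is_int_to_ext f1 f2 a L : (forall x, f1 x = f2 x) -> is_int_to f1 a L -> is_int_to f2 a L.
Proof. intros H. replace f2 with f1; auto. apply functional_extensionality; auto. Qed.

Lemma int_R_of_primitive f L c Ga Gb a0 b0 : is_int_R f L ->
  (forall a b, a <= a0 -> b0 <= b -> is_RInt f a b (c + Ga a + Gb b)) ->
  lim_minf Ga 0 -> lim_pinf Gb 0 -> L = c.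
Proof.
  intros HL HF Ha Hb. apply eq_of_close. intros eps He.
  destruct (HL (eps/3)) as [M HM]; [lra|].
  destruct (Ha (eps/3)) as [Ma HMa]; [lra|]. destruct (Hb (eps/3)) as [Mb HMb]; [lra|].
  set (a := Rmin (Rmin (- M) a0) Ma). set (b := Rmax (Rmax M b0) Mb).
  assert (a <= - M /\ a <= a0 /\ a <= Ma) as [A1 [A2 A3]].
  { unfold a. pose proof (Rmin_l (Rmin (- M) a0) Ma). pose proof (Rmin_r (Rmin (- M) a0) Ma).
    pose proof (Rmin_l (- M) a0). pose proof (Rmin_r (- M) a0). lra. }
  assert (M <= b /\ b0 <= b /\ Mb <= b) as [B1 [B2 B3]].
  { unfold b. pose proof (Rmax_l (Rmax M b0) Mb). pose proof (Rmax_r (Rmax M b0) Mb).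
    pose proof (Rmax_l M b0). pose proof (Rmax_r M b0). lra. }
  destruct (HM a b A1 B1) as [w [Hw1 Hw2]]. apply Defs_is_RInt_iff in Hw1.
  assert (w = c + Ga a + Gb b) by (eapply isR_unique; eauto).
  specialize (HMa a A3). specialize (HMb b B3). rewrite Rminus_0_r in *.
  apply Rabs_def2 in Hw2. apply Rabs_def2 in HMa. apply Rabs_def2 in HMb. apply Rabs_def1; lra.
Qed.

Lemma tail_from_bounded h d : Cont h -> (forall x, 0 <= h x) ->
  (forall b, d <= b -> RInt h d b <= 1) ->
  exists l, lim_pinf (fun b => RInt h d b) l /\ (forall b, d <= b -> RInt h d b <= l) /\ l <= 1.
Proof.
  intros Hc Hp Hb.
  destruct (monotone_lim_pinf (fun b => RInt h d b) d 1) as [l [Hl1 Hl2]]; auto.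
  { intros x y Hx Hy. apply RInt_sub_int; auto; lra. }
  exists l. repeat split; auto. apply (lim_pinf_le (fun b => RInt h d b) l d 1); auto.
Qed.

Lemma tail_to_bounded h d : Cont h -> (forall x, 0 <= h x) ->
  (forall a, a <= d -> RInt h a d <= 1) ->
  exists l, lim_minf (fun a => RInt h a d) l /\ (forall a, a <= d -> RInt h a d <= l) /\ l <= 1.
Proof.
  intros Hc Hp Hb.
  destruct (monotone_lim_pinf (fun b => RInt h (- b) d) (- d) 1) as [l [Hl1 Hl2]].
  { intros x y Hx Hy. apply RInt_sub_int; auto; lra. }
  { intros x Hx. apply Hb. lra. }
  exists l. split; [|split].
  - apply lim_minf_of_pinf. auto.
  - intros a Ha. replace a with (- - a) by ring. apply Hl2. lra.
  - apply (lim_pinf_le (fun b => RInt h (- b) d) l (- d) 1); auto. intros x Hx. apply Hb; lra.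
Qed.

(** * Consequences of rho being a continuous probability density *)

Section Density.
Variable rho : R -> R.
Hypothesis rho_cont : Cont rho.
Hypothesis rho_ge0 : forall x, 0 <= rho x.
Hypothesis rho_mass : is_int_R rho 1.

Lemma RInt_rho_le1 a b : a <= b -> RInt rho a b <= 1.
Proof.
  intros Hab. destruct (Rle_dec (RInt rho a b) 1) as [h|h]; auto. exfalso.
  destruct (rho_mass (RInt rho a b - 1)) as [M HM]; [lra|].
  destruct (HM (Rmin a (- M)) (Rmax b M) (Rmin_r _ _) (Rmax_r _ _)) as [v [Hv1 Hv2]].
  apply Defs_is_RInt_iff, RInt_val in Hv1.
  assert (RInt rho a b <= RInt rho (Rmin a (- M)) (Rmax b M))
    by (apply RInt_sub_int; auto using Rmin_l, Rmax_l).
  apply Rabs_def2 in Hv2. lra.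
Qed.

Lemma rho_exp_ge0 c x : 0 <= rho x * exp (c * x + 0).
Proof. apply Rmult_le_pos; auto. left; apply exp_pos. Qed.

Lemma RInt_rho_exp_le a b m c : a <= b -> (forall x, a <= x <= b -> exp (c * x + 0) <= m) ->
  RInt (fun t => rho t * exp (c * t + 0)) a b <= m * RInt rho a b.
Proof.
  intros Hab Hx.
  replace (m * RInt rho a b) with (RInt (fun t => m * rho t) a b)
    by (apply RInt_val, isR_scal, is_RInt_of_Cont; auto).
  apply RInt_mono; auto using Cont_mul_expl.
  - apply Cont_mul; auto. apply Cont_cst.
  - intros x Hx'. rewrite Rmult_comm. apply Rmult_le_compat_r; auto.
Qed.

Lemma RInt_rho_exp_bound a b m c : a <= b -> 0 <= m ->
  (forall x, a <= x <= b -> exp (c * x + 0) <= m) -> RInt (fun t => rho t * exp (c * t + 0)) a b <= m.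
Proof.
  intros Hab Hm Hx. eapply Rle_trans; [apply RInt_rho_exp_le; eauto|].
  pose proof (RInt_rho_le1 a b Hab). pose proof (RInt_ge0 rho a b rho_cont Hab rho_ge0).
  rewrite <- (Rmult_1_r m) at 2. apply Rmult_le_compat_l; lra.
Qed.

Lemma tail_rho_minf : exists l, lim_minf (fun a => RInt rho a 0) l /\
  (forall a, a <= 0 -> RInt rho a 0 <= l) /\ l <= 1.
Proof. apply tail_to_bounded; auto. intros; apply RInt_rho_le1; auto. Qed.

Lemma tail_rho_pinf : exists l, lim_pinf (fun b => RInt rho 0 b) l /\
  (forall b, 0 <= b -> RInt rho 0 b <= l) /\ l <= 1.
Proof. apply tail_from_bounded; auto. intros; apply RInt_rho_le1; auto. Qed.

Lemma tail_rho_exp_pinf : exists l,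
  lim_pinf (fun b => RInt (fun t => rho t * exp (-1 * t + 0)) 0 b) l /\
  (forall b, 0 <= b -> RInt (fun t => rho t * exp (-1 * t + 0)) 0 b <= l) /\ l <= 1.
Proof.
  apply tail_from_bounded; auto using Cont_mul_expl, rho_exp_ge0.
  intros b Hb. apply RInt_rho_exp_bound; auto; [lra|]. intros x Hx. apply exp_le_1. lra.
Qed.

Lemma tail_rho_exp_minf : exists l,
  lim_minf (fun a => RInt (fun t => rho t * exp (1 * t + 0)) a 0) l /\
  (forall a, a <= 0 -> RInt (fun t => rho t * exp (1 * t + 0)) a 0 <= l) /\ l <= 1.
Proof.
  apply tail_to_bounded; auto using Cont_mul_expl, rho_exp_ge0.
  intros a Ha. apply RInt_rho_exp_bound; auto; [lra|]. intros x Hx. apply exp_le_1. lra.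
Qed.

End Density.

(** * Expectation of a test function after one step of the chain *)

Lemma Dstep_eq dl x y z : Dstep dl x y z = Rmin (dl + y - x) z - Rmin 0 (dl + y - x + z).
Proof. unfold Dstep, Rmin. repeat destruct Rle_dec; lra. Qed.

Lemma exp_mul u v : exp u * exp v = exp (u + v).
Proof. rewrite exp_plus; auto. Qed.

Lemma exp_m1 s : exp (-1 * s + 0) = / exp (1 * s + 0).
Proof. rewrite <- exp_Ropp. f_equal. ring. Qed.

Lemma exp_2 s : exp (2 * s + 0) = exp (1 * s + 0) * exp (1 * s + 0).
Proof. rewrite exp_mul. f_equal. ring. Qed.

Lemma exp_m2 s : exp (-2 * s + 0) = / exp (1 * s + 0) * / exp (1 * s + 0).
Proof. rewrite <- exp_Ropp, exp_mul. f_equal. ring. Qed.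

Lemma lim_minf_exp c : 0 < c -> lim_minf (fun s => exp (c * s + 0)) 0.
Proof.
  intros Hc eps He. exists ((ln eps - 1) / c). intros a Ha.
  rewrite Rminus_0_r, Rabs_pos_eq by (left; apply exp_pos).
  rewrite <- (exp_ln eps He). apply exp_increasing.
  apply (Rmult_le_compat_l c) in Ha; [|lra].
  replace (c * ((ln eps - 1) / c)) with (ln eps - 1) in Ha by (field; lra). lra.
Qed.

(* Integrating out Y: if psi is the result of integrating out Z, as a function
   of a = d + Y - X, and Psi is a primitive of - psi(s) e^{-s} vanishing at
   +oo, then E psi(d + Y - X) = e^{d - X} Psi(d - X). *)
Lemma layer_y (psi Psi : R -> R) : Cont psi ->
  (forall s, is_derive Psi s (- (psi s * exp (-1 * s + 0)))) -> lim_pinf Psi 0 ->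
  forall dl x, is_int_from (fun y => psi (dl + y - x) * exp (- y)) 0
                 (exp (1 * (dl - x) + 0) * Psi (dl - x)).
Proof.
  intros Cont_psi Psi_der Hlim dl x.
  set (e := exp (1 * (dl - x) + 0)).
  apply (int_from_of_lim _ _ 0 (fun b => e * (Psi (dl - x) - Psi (dl + b - x)))).
  - intros b Hb.
    replace (e * (Psi (dl - x) - Psi (dl + b - x))) with
      ((- e * Psi (1 * b + (dl - x))) - (- e * Psi (1 * 0 + (dl - x)))).
    2: { replace (1 * b + (dl - x)) with (dl + b - x) by ring.
         replace (1 * 0 + (dl - x)) with (dl - x) by ring. ring. }
    apply (ftc (fun t => - e * Psi (1 * t + (dl - x)))).
    + intros t. eapply d_val.
      * apply (is_derive_scal (fun t => Psi (1 * t + (dl - x)))).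
        apply (d_comp Psi (fun t => 1 * t + (dl - x))); [apply Psi_der|apply d_lin].
      * replace (1 * t + (dl - x)) with (dl + t - x) by ring.
        transitivity (psi (dl + t - x) * (e * exp (-1 * (dl + t - x) + 0))); [ring|].
        unfold e. rewrite exp_mul. f_equal. f_equal. ring.
    + apply Cont_mul.
      * apply (Cont_ext (fun t => psi (1 * t + (dl - x)))); [intros; f_equal; ring|].
        apply Cont_compl, Cont_psi.
      * apply (Cont_ext (fun t => exp (-1 * t + 0))); [intros; f_equal; ring|apply Cont_expl].
  - replace (e * Psi (dl - x)) with (e * Psi (dl - x) + (- e) * 0) by ring.
    apply (lim_pinf_ext (fun b => e * Psi (dl - x) + (- e) * Psi (b + (dl - x)))).
    + exists 0. intros b _. replace (dl + b - x) with (b + (dl - x)) by ring. ring.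
    + apply lim_pinf_plus; [apply lim_pinf_const|]. apply lim_pinf_scal, lim_pinf_shift; auto.
Qed.

(* Integrating out X: if W is a primitive of e^{2s} Psi(s) vanishing at -oo,
   then E e^{d - X} Psi(d - X) = e^{-d} W(d). *)
Lemma layer_x (Psi W : R -> R) : Cont Psi ->
  (forall s, is_derive W s (exp (2 * s + 0) * Psi s)) -> lim_minf W 0 ->
  forall dl, is_int_from (fun x => exp (1 * (dl - x) + 0) * Psi (dl - x) * exp (- x)) 0
               (exp (-1 * dl + 0) * W dl).
Proof.
  intros Cont_Psi W_der Hlim dl.
  set (e := exp (-1 * dl + 0)).
  apply (int_from_of_lim _ _ 0 (fun b => e * (W dl - W (dl - b)))).
  - intros b Hb.
    replace (e * (W dl - W (dl - b))) with
      ((- e * W (-1 * b + dl)) - (- e * W (-1 * 0 + dl))).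
    2: { replace (-1 * b + dl) with (dl - b) by ring. replace (-1 * 0 + dl) with dl by ring. ring. }
    apply (ftc (fun t => - e * W (-1 * t + dl))).
    + intros t. eapply d_val.
      * apply (is_derive_scal (fun t => W (-1 * t + dl))).
        apply (d_comp W (fun t => -1 * t + dl)); [apply W_der|apply d_lin].
      * replace (-1 * t + dl) with (dl - t) by ring.
        transitivity (Psi (dl - t) * (e * exp (2 * (dl - t) + 0))); [ring|].
        transitivity (Psi (dl - t) * (exp (1 * (dl - t) + 0) * exp (- t))); [|ring].
        unfold e. rewrite !exp_mul. f_equal. f_equal. ring.
    + apply Cont_mul; [apply Cont_mul|].
      * apply (Cont_ext (fun t => exp (-1 * t + dl))); [intros; f_equal; ring|apply Cont_expl].
      * apply (Cont_ext (fun t => Psi (-1 * t + dl))); [intros; f_equal; ring|].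
        apply Cont_compl, Cont_Psi.
      * apply (Cont_ext (fun t => exp (-1 * t + 0))); [intros; f_equal; ring|apply Cont_expl].
  - replace (e * W dl) with (e * W dl + (- e) * 0) by ring.
    apply (lim_pinf_ext (fun b => e * W dl + (- e) * W (dl - b))); [exists 0; intros; ring|].
    apply lim_pinf_plus; [apply lim_pinf_const|]. apply lim_pinf_scal, lim_minf_shift; auto.
Qed.

(* Its expectation after one
   step from d is [pos_expect g r d] = P(d) + e^d R(d), where
   P(a) = int_0^a g(t) e^{-t} dt and R(a) = int_a^r g(t) e^{-2t} dt. *)
Section PositiveTest.
Variable g : R -> R.
Variables l r : R.
Hypothesis g_cont : Cont g.
Hypothesis l_pos : 0 < l.
Hypothesis g_supp : forall t, t <= l \/ r <= t -> g t = 0.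

Definition posP a : R := RInt (fun t => g t * exp (-1 * t + 0)) 0 a.
Definition posR a : R := RInt (fun t => g t * exp (-2 * t + 0)) a r.
(* Result of integrating out Z, as a function of a = d + Y - X. *)
Definition pos_z a : R := posP a + g a * exp (-1 * a + 0).
(* Primitive used to integrate out Y. *)
Definition pos_y s : R := posP s * exp (-1 * s + 0) + 2 * posR s.
(* Primitive used to integrate out X. *)
Definition pos_W s : R := posP s * exp (1 * s + 0) + exp (2 * s + 0) * posR s.
Definition pos_expect dl : R := posP dl + exp (1 * dl + 0) * posR dl.

Lemma posP_der x : is_derive posP x (g x * exp (-1 * x + 0)).
Proof. apply (d_prim (fun t => g t * exp (-1 * t + 0))), (Cont_mul_expl g _ g_cont). Qed.

Lemma posR_der x : is_derive posR x (- (g x * exp (-2 * x + 0))).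
Proof. apply (d_primL (fun t => g t * exp (-2 * t + 0))), (Cont_mul_expl g _ g_cont). Qed.

Lemma posP_zero a : a <= l -> posP a = 0.
Proof.
  intros Ha. apply RInt_val, isR_zero. intros x Hx. rewrite g_supp; [ring|]. left.
  assert (Rmax 0 a <= l) by (apply Rmax_lub; lra). lra.
Qed.

Lemma posR_zero a : r <= a -> posR a = 0.
Proof.
  intros Ha. apply RInt_val, isR_zero. intros x Hx. rewrite g_supp; [ring|]. right.
  assert (r <= Rmin a r) by (apply Rmin_glb; lra). lra.
Qed.

Lemma posP_const a : r <= a -> posP a = posP r.
Proof.
  intros Ha. unfold posP. rewrite <- (RInt_chasles _ 0 r a) by apply (Cont_mul_expl g _ g_cont).
  rewrite (RInt_val _ r a 0); [ring|]. apply isR_zero. intros x Hx. rewrite g_supp; [ring|]. right.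
  assert (r <= Rmin r a) by (apply Rmin_glb; lra). lra.
Qed.

Lemma posR_const a : a <= l -> posR a = posR l.
Proof.
  intros Ha. unfold posR. rewrite <- (RInt_chasles _ a l r) by apply (Cont_mul_expl g _ g_cont).
  rewrite (RInt_val _ a l 0); [ring|]. apply isR_zero. intros x Hx. rewrite g_supp; [ring|]. left.
  assert (Rmax a l <= l) by (apply Rmax_lub; lra). lra.
Qed.

(* E g(min(a, Z) - min(0, a + Z)) = pos_z a: for a <= 0 the step is <= 0
   where g vanishes; for a > 0 it is Z on [0, a] and a beyond. *)
Lemma pos_layer_z dl x y :
  is_int_from (fun z => g (Dstep dl x y z) * exp (- z)) 0 (pos_z (dl + y - x)).
Proof.
  set (a := dl + y - x).
  destruct (Rle_dec a 0) as [Ha|Ha].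
  - apply (int_from_of_lim _ _ 0 (fun _ => 0)).
    + intros b Hb. apply isR_zero. intros z Hzz.
      rewrite Rmin_left, Rmax_right in Hzz by lra. rewrite Dstep_eq. fold a.
      rewrite g_supp; [ring|]. left. unfold Rmin. repeat destruct Rle_dec; lra.
    + unfold pos_z. rewrite posP_zero, g_supp by lra.
      replace (0 + 0 * exp (-1 * a + 0)) with 0 by ring. apply lim_pinf_const.
  - apply (int_from_of_lim _ _ a (fun b => posP a + g a * (exp (-1 * a + 0) - exp (- b)))).
    + intros b Hab. apply (isR_chasles _ 0 a b).
      * apply (isR_ext (fun t => g t * exp (-1 * t + 0)));
          [|apply is_RInt_of_Cont, (Cont_mul_expl g _ g_cont)].
        intros z Hzz. rewrite Rmin_left, Rmax_right in Hzz by lra. rewrite Dstep_eq. fold a.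
        rewrite Rmin_right, Rmin_left by lra. rewrite Rminus_0_r. f_equal. f_equal. ring.
      * apply (isR_ext (fun t => g a * exp (-1 * t + 0))).
        { intros z Hzz. rewrite Rmin_left, Rmax_right in Hzz by lra. rewrite Dstep_eq. fold a.
          rewrite Rmin_left, Rmin_left by lra. rewrite Rminus_0_r. f_equal. f_equal. ring. }
        replace (g a * (exp (-1 * a + 0) - exp (- b)))
          with ((- g a * exp (-1 * b + 0)) - (- g a * exp (-1 * a + 0)))
          by (replace (-1 * b + 0) with (- b) by ring; ring).
        apply (ftc (fun t => - g a * exp (-1 * t + 0))).
        { intros t. apply (d_val _ _ (- g a * (-1 * exp (-1 * t + 0)))); [|ring].
          apply (is_derive_scal (fun t => exp (-1 * t + 0))). apply d_expl. }
        apply Cont_mul; [apply Cont_cst|apply Cont_expl].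
    + replace (pos_z a) with ((posP a + g a * exp (-1 * a + 0)) + (- g a) * 0)
        by (unfold pos_z; ring).
      apply (lim_pinf_ext (fun b => (posP a + g a * exp (-1 * a + 0)) + (- g a) * exp (- b)));
        [exists a; intros; ring|].
      apply lim_pinf_plus; [apply lim_pinf_const|]. apply lim_pinf_scal, lim_exp_neg.
Qed.

Lemma pos_y_der s : is_derive pos_y s (- (pos_z s * exp (-1 * s + 0))).
Proof.
  unfold pos_y. eapply d_val.
  - apply d_plus; [apply d_mul; [apply posP_der|apply d_expl]|].
    apply (is_derive_scal posR), posR_der.
  - unfold pos_z. rewrite exp_m1, exp_m2. ring.
Qed.

Lemma pos_y_lim : lim_pinf pos_y 0.
Proof.
  apply (lim_pinf_ext (fun s => posP r * exp (- s))).
  - exists r. intros s Hs. unfold pos_y. rewrite (posP_const s), (posR_zero s) by auto.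
    replace (-1 * s + 0) with (- s) by ring. ring.
  - replace 0 with (posP r * 0) by ring. apply lim_pinf_scal, lim_exp_neg.
Qed.

Lemma pos_W_der s : is_derive pos_W s (exp (2 * s + 0) * pos_y s).
Proof.
  unfold pos_W. eapply d_val.
  - apply d_plus; apply d_mul; auto using posP_der, posR_der, d_expl.
  - unfold pos_y. rewrite (exp_m1 s), (exp_2 s), (exp_m2 s).
    pose proof (exp_pos (1 * s + 0)). field. lra.
Qed.

Lemma pos_W_lim : lim_minf pos_W 0.
Proof.
  apply (lim_minf_ext (fun s => posR l * exp (2 * s + 0))).
  - exists 0. intros s Hs. unfold pos_W. rewrite (posP_zero s), (posR_const s) by lra. ring.
  - assert (H := lim_minf_scal (posR l) _ _ (lim_minf_exp 2 ltac:(lra))).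
    rewrite Rmult_0_r in H. exact H.
Qed.

Lemma pos_layers dl :
  exp_expect3 (fun x y z => g (Dstep dl x y z)) (pos_expect dl).
Proof.
  exists (fun x y => pos_z (dl + y - x)), (fun x => exp (1 * (dl - x) + 0) * pos_y (dl - x)).
  split; [|split].
  - apply pos_layer_z.
  - apply layer_y; auto using pos_y_der, pos_y_lim.
    apply Cont_plus; [apply (Cont_of_derive _ _ posP_der)|apply (Cont_mul_expl g _ g_cont)].
  - replace (pos_expect dl) with (exp (-1 * dl + 0) * pos_W dl).
    + apply layer_x; auto using pos_W_der, pos_W_lim. apply (Cont_of_derive _ _ pos_y_der).
    + unfold pos_expect, pos_W. rewrite (exp_m1 dl), (exp_2 dl).
      pose proof (exp_pos (1 * dl + 0)). field. lra.
Qed.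

End PositiveTest.

(* A test function supported in [l, r] with r < 0.  Its expectation after one
   step from d is [neg_expect g l d] = P(d) + e^{-d} V(d), where
   P(a) = int_a^0 g(t) e^t dt and V(a) = int_l^a g(t) e^{2t} dt. *)
Section NegativeTest.
Variable g : R -> R.
Variables l r : R.
Hypothesis g_cont : Cont g.
Hypothesis r_neg : r < 0.
Hypothesis g_supp : forall t, t <= l \/ r <= t -> g t = 0.

Definition negP a : R := RInt (fun t => g t * exp (1 * t + 0)) a 0.
Definition negV a : R := RInt (fun t => g t * exp (2 * t + 0)) l a.
(* Result of integrating out Z, as a function of a = d + Y - X. *)
Definition neg_z a : R := negP a + g a * exp (1 * a + 0).
(* Primitive used to integrate out Y. *)
Definition neg_y s : R := negP s * exp (-1 * s + 0).
(* Primitive used to integrate out X. *)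
Definition neg_W s : R := negP s * exp (1 * s + 0) + negV s.
Definition neg_expect dl : R := negP dl + exp (-1 * dl + 0) * negV dl.

Lemma negP_der x : is_derive negP x (- (g x * exp (1 * x + 0))).
Proof. apply (d_primL (fun t => g t * exp (1 * t + 0))), Cont_mul_expl; auto. Qed.

Lemma negV_der x : is_derive negV x (g x * exp (2 * x + 0)).
Proof. apply (d_prim (fun t => g t * exp (2 * t + 0))), Cont_mul_expl; auto. Qed.

Lemma negP_zero a : r <= a -> negP a = 0.
Proof.
  intros Ha. apply RInt_val, isR_zero. intros x Hx. rewrite g_supp; [ring|]. right.
  assert (r <= Rmin a 0) by (apply Rmin_glb; lra). lra.
Qed.

Lemma negV_zero a : a <= l -> negV a = 0.
Proof.
  intros Ha. apply RInt_val, isR_zero. intros x Hx. rewrite g_supp; [ring|]. left.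
  assert (Rmax l a <= l) by (apply Rmax_lub; lra). lra.
Qed.

Lemma negP_const a : a <= l -> negP a = negP l.
Proof.
  intros Ha. unfold negP. rewrite <- (RInt_chasles _ a l 0) by (apply Cont_mul_expl; auto).
  rewrite (RInt_val _ a l 0); [ring|]. apply isR_zero. intros x Hx. rewrite g_supp; [ring|]. left.
  assert (Rmax a l <= l) by (apply Rmax_lub; lra). lra.
Qed.

Lemma negV_const a : r <= a -> negV a = negV r.
Proof.
  intros Ha. unfold negV. rewrite <- (RInt_chasles _ l r a) by (apply Cont_mul_expl; auto).
  rewrite (RInt_val _ r a 0); [ring|]. apply isR_zero. intros x Hx. rewrite g_supp; [ring|]. right.
  assert (r <= Rmin r a) by (apply Rmin_glb; lra). lra.
Qed.

(* E g(min(a, Z) - min(0, a + Z)) = neg_z a: for a >= 0 the step is >= 0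
   where g vanishes; for a < 0 it is a + Z on [0, -a] and a beyond. *)
Lemma neg_layer_z dl x y :
  is_int_from (fun z => g (Dstep dl x y z) * exp (- z)) 0 (neg_z (dl + y - x)).
Proof.
  set (a := dl + y - x).
  destruct (Rle_dec 0 a) as [Ha|Ha].
  - apply (int_from_of_lim _ _ 0 (fun _ => 0)).
    + intros b Hb. apply isR_zero. intros z Hzz.
      rewrite Rmin_left, Rmax_right in Hzz by lra. rewrite Dstep_eq. fold a.
      rewrite g_supp; [ring|]. right. unfold Rmin. repeat destruct Rle_dec; lra.
    + unfold neg_z. rewrite negP_zero, g_supp by lra.
      replace (0 + 0 * exp (1 * a + 0)) with 0 by ring. apply lim_pinf_const.
  - apply (int_from_of_lim _ _ (- a) (fun b => negP a + g a * (exp (1 * a + 0) - exp (- b)))).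
    + intros b Hab. apply (isR_chasles _ 0 (- a) b).
      * apply (isR_ext (fun t => g (-1 * t + 0) * exp (-1 * t + 0))).
        { intros z Hzz. rewrite Rmin_left, Rmax_right in Hzz by lra. rewrite Dstep_eq. fold a.
          rewrite Rmin_left, Rmin_right by lra. f_equal; f_equal; ring. }
        replace (negP a) with (negP (-1 * - a + 0) - negP (-1 * 0 + 0)).
        { apply (ftc (fun t => negP (-1 * t + 0))).
          - intros t. eapply d_val.
            + apply (d_comp negP (fun t => -1 * t + 0)); [apply negP_der|apply d_lin].
            + replace (1 * (-1 * t + 0) + 0) with (-1 * t + 0) by ring. ring.
          - apply Cont_mul; [apply Cont_compl, g_cont|apply Cont_expl]. }
        replace (-1 * - a + 0) with a by ring. replace (-1 * 0 + 0) with 0 by ring.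
        rewrite (negP_zero 0) by lra. ring.
      * apply (isR_ext (fun t => g a * exp (-1 * t + 0))).
        { intros z Hzz. rewrite Rmin_left, Rmax_right in Hzz by lra. rewrite Dstep_eq. fold a.
          rewrite Rmin_left, Rmin_left by lra. rewrite Rminus_0_r. f_equal. f_equal. ring. }
        replace (g a * (exp (1 * a + 0) - exp (- b)))
          with ((- g a * exp (-1 * b + 0)) - (- g a * exp (-1 * - a + 0))).
        { apply (ftc (fun t => - g a * exp (-1 * t + 0))).
          - intros t. apply (d_val _ _ (- g a * (-1 * exp (-1 * t + 0)))); [|ring].
            apply (is_derive_scal (fun t => exp (-1 * t + 0))). apply d_expl.
          - apply Cont_mul; [apply Cont_cst|apply Cont_expl]. }
        replace (-1 * b + 0) with (- b) by ring.
        replace (-1 * - a + 0) with (1 * a + 0) by ring. ring.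
    + replace (neg_z a) with ((negP a + g a * exp (1 * a + 0)) + (- g a) * 0)
        by (unfold neg_z; ring).
      apply (lim_pinf_ext (fun b => (negP a + g a * exp (1 * a + 0)) + (- g a) * exp (- b)));
        [exists a; intros; ring|].
      apply lim_pinf_plus; [apply lim_pinf_const|]. apply lim_pinf_scal, lim_exp_neg.
Qed.

Lemma neg_y_der s : is_derive neg_y s (- (neg_z s * exp (-1 * s + 0))).
Proof.
  unfold neg_y. eapply d_val; [apply d_mul; [apply negP_der|apply d_expl]|].
  unfold neg_z. rewrite (exp_m1 s). pose proof (exp_pos (1 * s + 0)). field. lra.
Qed.

Lemma neg_y_lim : lim_pinf neg_y 0.
Proof.
  apply (lim_pinf_ext (fun _ => 0)); [|apply lim_pinf_const].
  exists r. intros b Hb. unfold neg_y. rewrite negP_zero by lra. ring.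
Qed.

Lemma neg_W_der s : is_derive neg_W s (exp (2 * s + 0) * neg_y s).
Proof.
  unfold neg_W. eapply d_val.
  - apply d_plus; [apply d_mul; [apply negP_der|apply d_expl]|apply negV_der].
  - unfold neg_y. rewrite (exp_m1 s), (exp_2 s). pose proof (exp_pos (1 * s + 0)). field. lra.
Qed.

Lemma neg_W_lim : lim_minf neg_W 0.
Proof.
  apply (lim_minf_ext (fun s => negP l * exp (1 * s + 0))).
  - exists l. intros b Hb. unfold neg_W. rewrite (negV_zero b), (negP_const b) by lra. ring.
  - assert (H := lim_minf_scal (negP l) _ _ (lim_minf_exp 1 ltac:(lra))).
    rewrite Rmult_0_r in H. exact H.
Qed.

Lemma neg_layers dl :
  exp_expect3 (fun x y z => g (Dstep dl x y z)) (neg_expect dl).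
Proof.
  exists (fun x y => neg_z (dl + y - x)), (fun x => exp (1 * (dl - x) + 0) * neg_y (dl - x)).
  split; [|split].
  - apply neg_layer_z.
  - apply layer_y; auto using neg_y_der, neg_y_lim.
    apply Cont_plus; [apply (Cont_of_derive _ _ negP_der)|apply Cont_mul_expl; auto].
  - replace (neg_expect dl) with (exp (-1 * dl + 0) * neg_W dl).
    + apply layer_x; auto using neg_W_der, neg_W_lim. apply (Cont_of_derive _ _ neg_y_der).
    + unfold neg_expect, neg_W. rewrite (exp_m1 dl). pose proof (exp_pos (1 * dl + 0)).
      field. lra.
Qed.

End NegativeTest.

(** * From stationarity to orthogonality relations *)

Lemma exp_expect3_unique phi v1 v2 : exp_expect3 phi v1 -> exp_expect3 phi v2 -> v1 = v2.
Proof.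
  intros [h2 [h1 [K1 [K2 K3]]]] [h2' [h1' [K1' [K2' K3']]]].
  assert (E2 : forall x y, h2 x y = h2' x y) by (intros; eapply int_from_unique; eauto).
  assert (E1 : forall x, h1 x = h1' x).
  { intros x. eapply int_from_unique; [apply K2|].
    eapply is_int_from_ext; [|apply K2']. intros y. simpl. rewrite E2. auto. }
  eapply int_from_unique; [apply K3|]. eapply is_int_from_ext; [|apply K3'].
  intros x. simpl. rewrite E1. auto.
Qed.

Lemma stationary_test rho g E l r : stationary_density rho -> Cont g ->
  (forall t, t <= l \/ r <= t -> g t = 0) ->
  (forall d, exp_expect3 (fun x y z => g (Dstep d x y z)) (E d)) ->
  exists L, is_int_R (fun t => rho t * E t) L /\ is_int_R (fun t => rho t * g t) L.
Proof.
  intros Hs Hg Hz HE.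
  assert (HK : exists K, forall t, K < Rabs t -> g t = 0).
  { exists (Rmax (Rabs l) (Rabs r)). intros t Ht. apply Hz.
    pose proof (Rmax_l (Rabs l) (Rabs r)). pose proof (Rmax_r (Rabs l) (Rabs r)).
    pose proof (Rle_abs l). pose proof (Rle_abs r). pose proof (Rle_abs (- l)).
    rewrite Rabs_Ropp in *. destruct (Rle_dec 0 t).
    - rewrite (Rabs_pos_eq t) in Ht by lra. right; lra.
    - rewrite (Rabs_left t) in Ht by lra. left; lra. }
  destruct (Hs g (continuity_of_Cont g Hg) HK) as [Eg [HEg [L [H1 H2]]]].
  exists L. split; auto. eapply is_int_R_ext; [|exact H1]. intros d. simpl. f_equal.
  eapply exp_expect3_unique; eauto.
Qed.

(* Integration by parts: if rho E - g K has a primitive H whose increments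
   far out are Ga(a) + Gb(b), with Ga, Gb vanishing at -oo, +oo, then equal
   integrals of rho E and rho g over R force int_l^r g (K - rho) = 0. *)
Lemma orthogonal_of_primitive rho g E K H Ga Gb l r :
  Cont rho -> Cont g -> Cont K -> Cont (fun t => rho t * E t) -> l <= r ->
  (forall t, t <= l \/ r <= t -> g t = 0) ->
  (forall t, is_derive H t (rho t * E t - g t * K t)) ->
  (forall a b, a <= l -> r <= b -> H b - H a = Ga a + Gb b) ->
  lim_minf Ga 0 -> lim_pinf Gb 0 ->
  (exists L, is_int_R (fun t => rho t * E t) L /\ is_int_R (fun t => rho t * g t) L) ->
  RInt (fun t => g t * (K t - rho t)) l r = 0.
Proof.
  intros Hrho Hg HK HE Hlr Hz HH Hinc Ha Hb [L [H1 H2]].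
  assert (HgK : Cont (fun t => g t * K t)) by (apply Cont_mul; auto).
  assert (Hrg : Cont (fun t => rho t * g t)) by (apply Cont_mul; auto).
  assert (gK_supp : forall t, t <= l \/ r <= t -> g t * K t = 0) by (intros t Ht; rewrite Hz; auto; ring).
  assert (rg_supp : forall t, t <= l \/ r <= t -> rho t * g t = 0) by (intros t Ht; rewrite Hz; auto; ring).
  assert (E1 : L = RInt (fun t => g t * K t) l r).
  { apply (int_R_of_primitive _ L _ Ga Gb l r H1); auto.
    intros a b Ha' Hb'. rewrite Rplus_assoc, <- Hinc by auto.
    apply (isR_ext (fun t => (rho t * E t - g t * K t) + g t * K t)); [intros; ring|].
    rewrite Rplus_comm. apply isR_plus.
    - apply ftc; auto. apply Cont_minus; auto.
    - apply isR_supp; auto; lra. }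
  assert (E2 : L = RInt (fun t => rho t * g t) l r).
  { apply (int_R_of_primitive _ L _ (fun _ => 0) (fun _ => 0) l r H2);
      auto using lim_minf_const, lim_pinf_const.
    intros a b Ha' Hb'. rewrite !Rplus_0_r. apply isR_supp; auto; lra. }
  apply RInt_val. apply (isR_ext (fun t => g t * K t - rho t * g t)); [intros; ring|].
  replace 0 with (RInt (fun t => g t * K t) l r - RInt (fun t => rho t * g t) l r) by lra.
  apply isR_minus; apply is_RInt_of_Cont; auto.
Qed.

(* A continuous F with int g F = 0 for every continuous g supported in a
   subinterval of (lo, hi) vanishes on (lo, hi): otherwise a tent function
   around a point where F has a sign gives a nonzero integral. *)
Lemma vanish_of_orthogonal F lo hi d0 : Cont F -> lo < d0 < hi ->
  (forall g l r, Cont g -> lo < l -> l < r -> r < hi -> (forall t, t <= l \/ r <= t -> g t = 0) ->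
     RInt (fun t => g t * F t) l r = 0) -> F d0 = 0.
Proof.
  intros HF Hd H.
  assert (not_pos : forall F, Cont F ->
    (forall g l r, Cont g -> lo < l -> l < r -> r < hi -> (forall t, t <= l \/ r <= t -> g t = 0) ->
       RInt (fun t => g t * F t) l r = 0) -> ~ 0 < F d0).
  { clear F HF H. intros F HF H Hpos.
    assert (Hc := HF d0). apply continuity_pt_filterlim in Hc.
    destruct (Hc (F d0 / 2)) as [alp [Halp Hal]]; [lra|].
    set (h := Rmin (alp / 2) (Rmin ((d0 - lo) / 2) ((hi - d0) / 2))).
    assert (hpos : 0 < h) by (unfold h; repeat apply Rmin_pos; lra).
    assert (h1 : h <= alp / 2) by apply Rmin_l.
    assert (h2 : h <= (d0 - lo) / 2) by (eapply Rle_trans; [apply Rmin_r|apply Rmin_l]).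
    assert (h3 : h <= (hi - d0) / 2) by (eapply Rle_trans; [apply Rmin_r|apply Rmin_r]).
    set (tent := fun t => Rmax 0 (h - Rabs (t - d0))).
    assert (Htent : Cont tent).
    { apply Cont_max0, Cont_minus; [apply Cont_cst|]. intros x. apply continuous_Rabs_comp.
      apply (Cont_minus (fun t => t) (fun _ => d0)); [apply Cont_id|apply Cont_cst]. }
    assert (tent_supp : forall t, t <= d0 - h \/ d0 + h <= t -> tent t = 0).
    { intros t Ht. unfold tent. apply Rmax_left. destruct Ht.
      - rewrite Rabs_left1 by lra. lra.
      - rewrite Rabs_pos_eq by lra. lra. }
    specialize (H tent (d0 - h) (d0 + h) Htent ltac:(lra) ltac:(lra) ltac:(lra) tent_supp).
    enough (0 < RInt (fun t => tent t * F t) (d0 - h) (d0 + h)) by lra.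
    apply RInt_pos_lt; [apply Cont_mul; auto|lra|]. intros x Hx. apply Rmult_lt_0_compat.
    - unfold tent. apply Rlt_le_trans with (h - Rabs (x - d0)); [|apply Rmax_r].
      assert (Rabs (x - d0) < h) by (apply Rabs_def1; lra). lra.
    - destruct (Req_dec x d0) as [->|Hne]; [lra|].
      assert (Hb : D_x no_cond d0 x /\ dist R_met x d0 < alp).
      { split; [split; [constructor|auto]|]. simpl. unfold R_dist. apply Rabs_def1; lra. }
      specialize (Hal x Hb). simpl in Hal. unfold R_dist in Hal. apply Rabs_def2 in Hal. lra. }
  destruct (Rtotal_order (F d0) 0) as [Hlt|[Heq|Hgt]]; auto; exfalso.
  - apply (not_pos (fun t => - F t)); [apply Cont_opp; auto| |lra].
    intros g l r Hg H1 H2 H3 Hz. specialize (H g l r Hg H1 H2 H3 Hz).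
    replace (fun t => g t * - F t) with (fun t => -1 * (g t * F t))
      by (apply functional_extensionality; intros; ring).
    rewrite (RInt_val _ l r (-1 * RInt (fun t => g t * F t) l r)); [lra|].
    apply isR_scal, is_RInt_of_Cont, Cont_mul; auto.
  - apply (not_pos F HF H Hgt).
Qed.

(** * The integral equations *)

(* int_{-oo}^d h and int_d^{+oo} h, written through the tails L0 of h at 0. *)
Definition lower_tail h L0 d : R := L0 + RInt h 0 d.
Definition upper_tail h L0 d : R := L0 - RInt h 0 d.

Lemma lower_tail_der h L0 x : Cont h -> is_derive (lower_tail h L0) x (h x).
Proof. intros Hh. eapply d_val; [apply d_plus; [apply d_cst|apply (d_prim h); auto]|ring]. Qed.

Lemma upper_tail_der h L0 x : Cont h -> is_derive (upper_tail h L0) x (- h x).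
Proof. intros Hh. eapply d_val; [apply d_minus; [apply d_cst|apply (d_prim h); auto]|ring]. Qed.

Lemma lower_tail_int h L0 d :
  Cont h -> lim_minf (fun a => RInt h a 0) L0 -> is_int_to h d (lower_tail h L0 d).
Proof.
  intros Hh HL. apply (int_to_of_lim _ _ (fun a => RInt h a d)); [intros; apply is_RInt_of_Cont; auto|].
  apply (lim_minf_ext (fun a => RInt h a 0 + RInt h 0 d)).
  - exists 0. intros; apply RInt_chasles; auto.
  - apply lim_minf_addc; auto.
Qed.

Lemma upper_tail_int h L0 d :
  Cont h -> lim_pinf (fun b => RInt h 0 b) L0 -> is_int_from h d (upper_tail h L0 d).
Proof.
  intros Hh HL. apply (int_from_of_lim _ _ d (fun b => RInt h d b)); [intros; apply is_RInt_of_Cont; auto|].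
  apply (lim_pinf_ext (fun b => RInt h 0 b + - RInt h 0 d)).
  - exists 0. intros b _. rewrite <- (RInt_chasles h 0 d b Hh). ring.
  - apply lim_pinf_addc; auto.
Qed.

Lemma lower_tail_lim h L0 :
  Cont h -> lim_minf (fun a => RInt h a 0) L0 -> lim_minf (lower_tail h L0) 0.
Proof.
  intros Hh HL. apply (lim_minf_ext (fun a => -1 * RInt h a 0 + L0)).
  - exists 0. intros a _. unfold lower_tail. rewrite (RInt_swap h 0 a Hh). ring.
  - assert (H := lim_minf_addc _ _ L0 (lim_minf_scal (-1) _ _ HL)).
    replace (-1 * L0 + L0) with 0 in H by ring. exact H.
Qed.

Lemma upper_tail_lim h L0 : lim_pinf (fun b => RInt h 0 b) L0 -> lim_pinf (upper_tail h L0) 0.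
Proof.
  intros HL. apply (lim_pinf_ext (fun b => -1 * RInt h 0 b + L0)).
  - exists 0. intros b _. unfold upper_tail. ring.
  - assert (H := lim_pinf_addc _ _ L0 (lim_pinf_scal (-1) _ _ HL)).
    replace (-1 * L0 + L0) with 0 in H by ring. exact H.
Qed.

Section Equations.
Variable rho : R -> R.
Hypothesis rho_cont : Cont rho.
Hypothesis rho_stat : stationary_density rho.
Variables A0 B0 C0 D0 : R.
Hypothesis A0_lim : lim_minf (fun a => RInt rho a 0) A0.
Hypothesis B0_lim : lim_pinf (fun b => RInt (fun t => rho t * exp (-1 * t + 0)) 0 b) B0.
Hypothesis C0_lim : lim_minf (fun a => RInt (fun t => rho t * exp (1 * t + 0)) a 0) C0.
Hypothesis D0_lim : lim_pinf (fun b => RInt rho 0 b) D0.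

(* A = int_{-oo}^d rho, B = int_d^{+oo} rho e^{-t},
   C = int_{-oo}^d rho e^t, D = int_d^{+oo} rho. *)
Definition tailA : R -> R := lower_tail rho A0.
Definition tailB : R -> R := upper_tail (fun t => rho t * exp (-1 * t + 0)) B0.
Definition tailC : R -> R := lower_tail (fun t => rho t * exp (1 * t + 0)) C0.
Definition tailD : R -> R := upper_tail rho D0.

Definition rhs_neg d : R := exp (1 * d + 0) * tailA d + exp (2 * d + 0) * tailB d.
Definition rhs_pos d : R := exp (-2 * d + 0) * tailC d + exp (-1 * d + 0) * tailD d.

Lemma Cont_rhs_neg : Cont rhs_neg.
Proof.
  apply Cont_plus; apply Cont_mul; try apply Cont_expl.
  - apply (Cont_of_derive _ _ (fun x => lower_tail_der rho A0 x rho_cont)).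
  - apply (Cont_of_derive _ _ (fun x => upper_tail_der _ B0 x (Cont_mul_expl rho (-1) rho_cont))).
Qed.

Lemma Cont_rhs_pos : Cont rhs_pos.
Proof.
  apply Cont_plus; apply Cont_mul; try apply Cont_expl.
  - apply (Cont_of_derive _ _ (fun x => lower_tail_der _ C0 x (Cont_mul_expl rho 1 rho_cont))).
  - apply (Cont_of_derive _ _ (fun x => upper_tail_der rho D0 x rho_cont)).
Qed.

Lemma orthogonal_neg g l r : Cont g -> l < r -> r < 0 ->
  (forall t, t <= l \/ r <= t -> g t = 0) ->
  RInt (fun t => g t * (rhs_neg t - rho t)) l r = 0.
Proof.
  intros Hg Hlr Hr Hz.
  apply (orthogonal_of_primitive rho g (neg_expect g l) rhs_neg
           (fun t => tailA t * negP g t - tailB t * negV g l t)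
           (fun a => - (negP g l * tailA a)) (fun b => - (negV g l r * tailB b)));
    auto using Cont_rhs_neg; try lra.
  - apply Cont_mul; auto. apply Cont_plus.
    + apply (Cont_of_derive _ _ (negP_der g Hg)).
    + apply Cont_mul; [apply Cont_expl|apply (Cont_of_derive _ _ (negV_der g l Hg))].
  - intros t. eapply d_val.
    + apply d_minus; apply d_mul.
      * apply lower_tail_der; auto.
      * apply (negP_der g Hg).
      * apply upper_tail_der, Cont_mul_expl; auto.
      * apply (negV_der g l Hg).
    + unfold neg_expect, rhs_neg. rewrite (exp_m1 t), (exp_2 t).
      pose proof (exp_pos (1 * t + 0)). field. lra.
  - intros a b Ha Hb.
    rewrite (negP_zero g l r Hr Hz b), (negV_zero g l r Hz a), (negP_const g l r Hg Hz a),
      (negV_const g l r Hg Hz b) by lra. ring.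
  - replace 0 with (- negP g l * 0) by ring.
    apply (lim_minf_ext (fun a => - negP g l * tailA a)); [exists 0; intros; ring|].
    apply lim_minf_scal, lower_tail_lim; auto.
  - replace 0 with (- negV g l r * 0) by ring.
    apply (lim_pinf_ext (fun b => - negV g l r * tailB b)); [exists 0; intros; ring|].
    apply lim_pinf_scal, upper_tail_lim; auto.
  - apply (stationary_test rho g (neg_expect g l) l r); auto.
    intros d. apply (neg_layers g l r Hg Hr Hz).
Qed.

Lemma orthogonal_pos g l r : Cont g -> 0 < l -> l < r ->
  (forall t, t <= l \/ r <= t -> g t = 0) ->
  RInt (fun t => g t * (rhs_pos t - rho t)) l r = 0.
Proof.
  intros Hg Hl Hlr Hz.
  apply (orthogonal_of_primitive rho g (pos_expect g r) rhs_pos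
           (fun t => tailC t * posR g r t - tailD t * posP g t)
           (fun a => - (posR g r l * tailC a)) (fun b => - (posP g r * tailD b)));
    auto using Cont_rhs_pos; try lra.
  - apply Cont_mul; auto. apply Cont_plus.
    + apply (Cont_of_derive _ _ (posP_der g Hg)).
    + apply Cont_mul; [apply Cont_expl|apply (Cont_of_derive _ _ (posR_der g r Hg))].
  - intros t. eapply d_val.
    + apply d_minus; apply d_mul.
      * apply lower_tail_der, Cont_mul_expl; auto.
      * apply (posR_der g r Hg).
      * apply upper_tail_der; auto.
      * apply (posP_der g Hg).
    + unfold pos_expect, rhs_pos. rewrite (exp_m1 t), (exp_m2 t).
      pose proof (exp_pos (1 * t + 0)). field. lra.
  - intros a b Ha Hb.
    rewrite (posP_zero g l r Hl Hz a), (posR_zero g l r Hz b), (posP_const g l r Hg Hz b),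
      (posR_const g l r Hg Hz a) by lra. ring.
  - replace 0 with (- posR g r l * 0) by ring.
    apply (lim_minf_ext (fun a => - posR g r l * tailC a)); [exists 0; intros; ring|].
    apply lim_minf_scal, lower_tail_lim; auto. apply Cont_mul_expl; auto.
  - replace 0 with (- posP g r * 0) by ring.
    apply (lim_pinf_ext (fun b => - posP g r * tailD b)); [exists 0; intros; ring|].
    apply lim_pinf_scal, upper_tail_lim; auto.
  - apply (stationary_test rho g (pos_expect g r) l r); auto.
    intros d. apply (pos_layers g l r Hg Hl Hz).
Qed.

Lemma rho_eq_rhs_neg d : d < 0 -> rho d = rhs_neg d.
Proof.
  intros Hd. enough (rhs_neg d - rho d = 0) by lra.
  apply (vanish_of_orthogonal (fun t => rhs_neg t - rho t) (d - 1) 0 d);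
    [apply Cont_minus; auto using Cont_rhs_neg|lra|].
  intros g l r Hg H1 H2 H3 Hz. apply orthogonal_neg; auto.
Qed.

Lemma rho_eq_rhs_pos d : 0 < d -> rho d = rhs_pos d.
Proof.
  intros Hd. enough (rhs_pos d - rho d = 0) by lra.
  apply (vanish_of_orthogonal (fun t => rhs_pos t - rho t) 0 (d + 1) d);
    [apply Cont_minus; auto using Cont_rhs_pos|lra|].
  intros g l r Hg H1 H2 H3 Hz. apply orthogonal_pos; auto.
Qed.

Lemma rho_eq_rhs_nonneg d : 0 <= d -> rho d = rhs_pos d.
Proof.
  intros [Hd|<-]; [apply rho_eq_rhs_pos; auto|].
  replace 0 with (- 0) by ring.
  apply (cont_left_eq (fun t => rho (- t)) (fun t => rhs_pos (- t))).
  - apply (Cont_ext (fun t => rho (-1 * t + 0))); [intros; f_equal; ring|].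
    apply Cont_compl; auto.
  - apply (Cont_ext (fun t => rhs_pos (-1 * t + 0))); [intros; f_equal; ring|].
    apply Cont_compl, Cont_rhs_pos.
  - intros t Ht. apply rho_eq_rhs_pos. lra.
Qed.

Lemma integral_equation_neg d : d < 0 ->
  exists I1 I2, is_int_to rho d I1 /\
    is_int_from (fun delta => rho delta * exp (- delta)) d I2 /\
    rho d = exp d * I1 + exp (2 * d) * I2.
Proof.
  intros Hd. exists (tailA d), (tailB d). split; [|split].
  - apply lower_tail_int; auto.
  - eapply is_int_from_ext; [|apply upper_tail_int; [apply Cont_mul_expl, rho_cont|apply B0_lim]].
    intros x. simpl. do 2 f_equal. ring.
  - rewrite rho_eq_rhs_neg by auto. unfold rhs_neg.
    replace (1 * d + 0) with d by ring. replace (2 * d + 0) with (2 * d) by ring. reflexivity.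
Qed.

Lemma integral_equation_pos d : 0 <= d ->
  exists I1 I2, is_int_to (fun delta => rho delta * exp delta) d I1 /\
    is_int_from rho d I2 /\
    rho d = exp (- (2 * d)) * I1 + exp (- d) * I2.
Proof.
  intros Hd. exists (tailC d), (tailD d). split; [|split].
  - eapply is_int_to_ext; [|apply lower_tail_int; [apply Cont_mul_expl, rho_cont|apply C0_lim]].
    intros x. simpl. do 2 f_equal. ring.
  - apply upper_tail_int; auto.
  - rewrite rho_eq_rhs_nonneg by auto. unfold rhs_pos.
    replace (-2 * d + 0) with (- (2 * d)) by ring. replace (-1 * d + 0) with (- d) by ring.
    reflexivity.
Qed.

End Equations.

(** * Uniqueness for the system satisfied on the negative half-line *)

Lemma continuity_pt_of_derive (G : R -> R) t l : is_derive G t l -> continuity_pt G t.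
Proof.
  intros H. apply continuity_pt_filterlim.
  apply (ex_derive_continuous (K:=R_AbsRing) (V:=R_NormedModule)). eexists; eauto.
Qed.

Lemma mvt_on_neg G G' u v : (forall t, t < 0 -> is_derive G t (G' t)) -> u <= v -> v < 0 ->
  exists c, u <= c <= v /\ G v - G u = G' c * (v - u).
Proof.
  intros H Huv Hv. destruct (MVT_gen G u v G') as [c [Hc1 Hc2]].
  - intros x Hx. rewrite Rmin_left, Rmax_right in Hx by lra. apply H. lra.
  - intros x Hx. rewrite Rmin_left, Rmax_right in Hx by lra.
    apply (continuity_pt_of_derive G x (G' x)), H. lra.
  - rewrite Rmin_left, Rmax_right in Hc1 by lra. exists c. split; auto.
Qed.

Lemma nonincreasing_on_neg G G' :
  (forall t, t < 0 -> is_derive G t (G' t)) -> (forall t, t < 0 -> G' t <= 0) ->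
  forall u v, u <= v -> v < 0 -> G v <= G u.
Proof.
  intros H H' u v Huv Hv. destruct (mvt_on_neg G G' u v H Huv Hv) as [c [Hc E]].
  assert (G' c <= 0) by (apply H'; lra). nra.
Qed.

Lemma constant_on_neg G : (forall t, t < 0 -> is_derive G t 0) -> forall u, u < 0 -> G u = G (-1).
Proof.
  intros H u Hu. destruct (Rle_dec u (-1)).
  - destruct (mvt_on_neg G (fun _ => 0) u (-1) H) as [c [Hc E]]; lra.
  - destruct (mvt_on_neg G (fun _ => 0) (-1) u H) as [c [Hc E]]; lra.
Qed.

Lemma derive_zero_of_locally_zero F d l a b :
  a < d < b -> (forall t, a < t < b -> F t = 0) -> is_derive F d l -> l = 0.
Proof.
  intros Hd Hz HF.
  assert (H0 : is_derive (fun _ : R => 0) d l).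
  { apply (is_derive_ext_loc F); auto. apply (locally_interval _ d a b); simpl; try lra.
    intros y H1 H2. apply Hz; lra. }
  eapply d_unique; [apply H0|apply d_cst].
Qed.

(* The system f = e^d A + e^{2d} B, A' = f, B' = - e^{-d} f on d < 0, with
   A -> 0 at -oo and the a priori bounds enjoyed by the tails of a
   probability density.  Both rho and its reflection satisfy it. *)
Record half_line_system (f A B : R -> R) : Prop := {
  sys_A_der : forall d, d < 0 -> is_derive A d (f d);
  sys_B_der : forall d, d < 0 -> is_derive B d (- (f d * exp (-1 * d + 0)));
  sys_eq : forall d, d < 0 -> f d = exp (1 * d + 0) * A d + exp (2 * d + 0) * B d;
  sys_A_lim : lim_minf A 0;
  sys_A_ge0 : forall d, d < 0 -> 0 <= A d;
  sys_A_le1 : forall d, d < 0 -> A d <= 1;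
  sys_B_ge0 : forall d, d < 0 -> 0 <= B d;
  sys_B_le : forall d, d < 0 -> B d <= 1 + exp (-1 * d + 0);
  sys_f_ge0 : forall d, d < 0 -> 0 <= f d }.

Section HalfLineSystem.
Variables f A B : R -> R.
Hypothesis S : half_line_system f A B.

(* f = O(e^d), from the bounds on A and B. *)
Lemma system_f_le d : d < 0 -> f d <= 3 * exp (1 * d + 0).
Proof.
  intros Hd. rewrite (sys_eq _ _ _ S d Hd), exp_2.
  pose proof (sys_A_le1 _ _ _ S d Hd) as HA. pose proof (sys_B_le _ _ _ S d Hd) as HB.
  rewrite (exp_m1 d) in HB. set (e := exp (1 * d + 0)) in *.
  assert (He : 0 < e) by apply exp_pos.
  assert (e <= 1) by (apply exp_le_1; lra).
  assert (HeB : e * e * B d <= e * e * (1 + / e)) by (apply Rmult_le_compat_l; nra).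
  replace (e * e * (1 + / e)) with (e * e + e) in HeB by (field; lra). nra.
Qed.

(* A decays like e^d: A - 3 e^d is nonincreasing and tends to 0 at -oo. *)
Lemma system_A_le d : d < 0 -> A d <= 3 * exp (1 * d + 0).
Proof.
  intros Hd.
  assert (Hm : forall u, u <= d -> A d + -3 * exp (1 * d + 0) <= A u + -3 * exp (1 * u + 0)).
  { intros u Hu.
    apply (nonincreasing_on_neg (fun t => A t + -3 * exp (1 * t + 0))
             (fun t => f t + -3 * (1 * exp (1 * t + 0)))); auto.
    - intros t Ht. apply d_plus; [apply (sys_A_der _ _ _ S t Ht)|].
      apply (is_derive_scal (fun t => exp (1 * t + 0))), d_expl.
    - intros t Ht. pose proof (system_f_le t Ht). lra. }
  assert (Hl : lim_pinf (fun x => A (- x) + -3 * exp (1 * - x + 0)) 0).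
  { assert (K := lim_pinf_plus _ _ _ _ (lim_pinf_of_minf _ _ (sys_A_lim _ _ _ S))
                   (lim_pinf_scal (-3) _ _ (lim_pinf_of_minf _ _ (lim_minf_exp 1 Rlt_0_1)))).
    rewrite Rmult_0_r, Rplus_0_r in K. exact K. }
  enough (A d + -3 * exp (1 * d + 0) <= 0) by lra.
  apply Rnot_lt_le. intros Hc. destruct (Hl (A d + -3 * exp (1 * d + 0))) as [M HM]; [lra|].
  specialize (HM (Rmax M (- d)) (Rmax_l _ _)). specialize (Hm (- Rmax M (- d))).
  pose proof (Rmax_r M (- d)). rewrite Rminus_0_r in HM. apply Rabs_def2 in HM.
  specialize (Hm ltac:(lra)). lra.
Qed.

(* B grows at most linearly at -oo, since |B'| = e^{-d} f <= 3. *)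
Lemma system_B_le d : d <= -1 -> B d <= B (-1) + 3 * (-1 - d).
Proof.
  intros Hd.
  assert (D1 : forall t, t < 0 -> is_derive (fun t => - (B t + 3 * t)) t
                                   (- (- (f t * exp (-1 * t + 0)) + 3))).
  { intros t Ht. apply d_opp, d_plus; [apply (sys_B_der _ _ _ S t Ht)|].
    apply (d_ext (fun t => 3 * t + 0)); [intros; ring|apply d_lin]. }
  assert (D2 : forall t, t < 0 -> - (- (f t * exp (-1 * t + 0)) + 3) <= 0).
  { intros t Ht. pose proof (system_f_le t Ht). rewrite (exp_m1 t).
    pose proof (exp_pos (1 * t + 0)).
    assert (f t * / exp (1 * t + 0) <= 3).
    { apply (Rmult_le_reg_r (exp (1 * t + 0))); auto. rewrite Rmult_assoc, Rinv_l; lra. }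
    lra. }
  assert (K := nonincreasing_on_neg _ _ D1 D2 d (-1) Hd ltac:(lra)). simpl in K. lra.
Qed.

(* A solution with A vanishing somewhere vanishes identically: A and B are
   monotone and nonnegative, so A = 0 to the left of that point, hence f = 0
   and B = 0 there; B being nonincreasing and nonnegative, B = 0 everywhere. *)
Lemma system_dichotomy : (forall d, d < 0 -> 0 < A d) \/ (forall d, d < 0 -> f d = 0).
Proof.
  destruct (classic (forall d, d < 0 -> 0 < A d)) as [H|H]; [left; auto|right].
  apply not_all_ex_not in H. destruct H as [d0 Hd0].
  apply imply_to_and in Hd0. destruct Hd0 as [Hd0 HA].
  pose proof (sys_A_ge0 _ _ _ S) as A_ge0. pose proof (sys_B_ge0 _ _ _ S) as B_ge0.
  assert (A_d0 : A d0 = 0) by (pose proof (A_ge0 d0 Hd0); lra).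
  assert (A_mono : forall u v, u <= v -> v < 0 -> A u <= A v).
  { intros u v Huv Hv.
    enough (- A v <= - A u) by lra.
    apply (nonincreasing_on_neg (fun t => - A t) (fun t => - f t)); auto.
    - intros t Ht. apply d_opp, (sys_A_der _ _ _ S t Ht).
    - intros t Ht. pose proof (sys_f_ge0 _ _ _ S t Ht). lra. }
  assert (A_zero : forall t, t < d0 -> A t = 0).
  { intros t Ht. pose proof (A_ge0 t ltac:(lra)). pose proof (A_mono t d0 ltac:(lra) Hd0). lra. }
  assert (f_zero : forall t, t < d0 -> f t = 0).
  { intros t Ht. apply (derive_zero_of_locally_zero A t (f t) (t - 1) d0); try lra.
    - intros; apply A_zero; lra.
    - apply (sys_A_der _ _ _ S t); lra. }
  assert (B_zero_left : forall t, t < d0 -> B t = 0).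
  { intros t Ht. pose proof (sys_eq _ _ _ S t ltac:(lra)) as e.
    rewrite f_zero, A_zero in e by lra. pose proof (exp_pos (2 * t + 0)). nra. }
  assert (B_mono : forall u v, u <= v -> v < 0 -> B v <= B u).
  { apply (nonincreasing_on_neg B (fun t => - (f t * exp (-1 * t + 0)))).
    - intros t Ht. apply (sys_B_der _ _ _ S t Ht).
    - intros t Ht. pose proof (sys_f_ge0 _ _ _ S t Ht). pose proof (exp_pos (-1 * t + 0)). nra. }
  assert (B_zero : forall t, t < 0 -> B t = 0).
  { intros t Ht. pose proof (B_ge0 t Ht). set (u := Rmin (d0 - 1) t).
    pose proof (Rmin_l (d0 - 1) t). pose proof (B_mono u t (Rmin_r _ _) Ht).
    rewrite (B_zero_left u) in * by (unfold u; lra). lra. }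
  intros t Ht. assert (- (f t * exp (-1 * t + 0)) = 0).
  { apply (derive_zero_of_locally_zero B t _ (t - 1) (t / 2)); try lra.
    - intros; apply B_zero; lra.
    - apply (sys_B_der _ _ _ S t Ht). }
  pose proof (exp_pos (-1 * t + 0)). nra.
Qed.

End HalfLineSystem.

(* e^d (c + 3 (-1 - d)) -> 0 at -oo: the linear factor is absorbed by
   e^{d/2}, since -d <= 2 e^{-d/2}. *)
Lemma lim_minf_exp_linear c : 0 <= c -> lim_minf (fun d => exp (1 * d + 0) * (c + 3 * (-1 - d))) 0.
Proof.
  intros Hc eps He.
  assert (K : forall d, d <= -1 ->
            Rabs (exp (1 * d + 0) * (c + 3 * (-1 - d)) - 0) <= (c + 6) * exp (d / 2)).
  { intros d Hd. rewrite Rminus_0_r.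
    assert (E1 : exp (1 * d + 0) = exp (d / 2) * exp (d / 2)) by (rewrite exp_mul; f_equal; field).
    assert (E2 : - d <= 2 * exp (- (d / 2))) by (pose proof (exp_ineq1_le (- (d / 2))); lra).
    assert (E3 : exp (d / 2) * exp (- (d / 2)) = 1)
      by (rewrite exp_mul; replace (d / 2 + - (d / 2)) with 0 by field; apply exp_0).
    assert (E4 : exp (d / 2) <= 1) by (apply exp_le_1; lra).
    pose proof (exp_pos (d / 2)). pose proof (exp_pos (- (d / 2))).
    rewrite Rabs_pos_eq by (apply Rmult_le_pos; [left; apply exp_pos|lra]).
    rewrite E1. assert (exp (d / 2) * (c + 3 * (-1 - d)) <= c + 6) by nra. nra. }
  set (M := Rmin (-1) (2 * ln (eps / 2 / (c + 6)))).
  pose proof (Rmin_l (-1) (2 * ln (eps / 2 / (c + 6)))).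
  pose proof (Rmin_r (-1) (2 * ln (eps / 2 / (c + 6)))).
  exists M. intros d Hd. eapply Rle_lt_trans; [apply K; unfold M in Hd; lra|].
  assert (exp (d / 2) <= eps / 2 / (c + 6)).
  { rewrite <- (exp_ln (eps / 2 / (c + 6))) by (apply Rdiv_lt_0_compat; lra).
    apply exp_le_mono. unfold M in Hd. lra. }
  apply Rle_lt_trans with ((c + 6) * (eps / 2 / (c + 6))); [apply Rmult_le_compat_l; lra|].
  replace ((c + 6) * (eps / 2 / (c + 6))) with (eps / 2) by (field; lra). lra.
Qed.

Section TwoSolutions.
Variables f1 A1 B1 f2 A2 B2 : R -> R.
Hypothesis S1 : half_line_system f1 A1 B1.
Hypothesis S2 : half_line_system f2 A2 B2.

(* The Wronskian A1 B2 - A2 B1 is O(|d| e^d) at -oo. *)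
Lemma wronskian_lim : lim_minf (fun d => A1 d * B2 d - A2 d * B1 d) 0.
Proof.
  set (c := Rmax (B1 (-1)) (B2 (-1))).
  assert (Hc0 : 0 <= c).
  { eapply Rle_trans; [apply (sys_B_ge0 _ _ _ S1 (-1)); lra|apply Rmax_l]. }
  assert (K : forall d, d <= -1 -> Rabs (A1 d * B2 d - A2 d * B1 d - 0) <=
                                  6 * (exp (1 * d + 0) * (c + 3 * (-1 - d)))).
  { intros d Hd. rewrite Rminus_0_r.
    pose proof (sys_A_ge0 _ _ _ S1 d ltac:(lra)). pose proof (sys_B_ge0 _ _ _ S1 d ltac:(lra)).
    pose proof (sys_A_ge0 _ _ _ S2 d ltac:(lra)). pose proof (sys_B_ge0 _ _ _ S2 d ltac:(lra)).
    pose proof (system_A_le f1 A1 B1 S1 d ltac:(lra)). pose proof (system_A_le f2 A2 B2 S2 d ltac:(lra)).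
    pose proof (system_B_le f1 A1 B1 S1 d Hd). pose proof (system_B_le f2 A2 B2 S2 d Hd).
    assert (B1 (-1) <= c) by apply Rmax_l. assert (B2 (-1) <= c) by apply Rmax_r.
    pose proof (exp_pos (1 * d + 0)).
    assert (A1 d * B2 d <= 3 * exp (1 * d + 0) * (c + 3 * (-1 - d))) by (apply Rmult_le_compat; lra).
    assert (A2 d * B1 d <= 3 * exp (1 * d + 0) * (c + 3 * (-1 - d))) by (apply Rmult_le_compat; lra).
    assert (0 <= A1 d * B2 d) by (apply Rmult_le_pos; auto).
    assert (0 <= A2 d * B1 d) by (apply Rmult_le_pos; auto).
    apply Rabs_le. split; lra. }
  intros eps He. destruct (lim_minf_exp_linear c Hc0 (eps / 6)) as [M HM]; [lra|].
  pose proof (Rmin_l M (-1)). pose proof (Rmin_r M (-1)).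
  exists (Rmin M (-1)). intros d Hd. eapply Rle_lt_trans; [apply K; lra|].
  specialize (HM d ltac:(lra)). rewrite Rminus_0_r in HM.
  rewrite Rabs_pos_eq in HM by (apply Rmult_le_pos; [left; apply exp_pos|lra]). lra.
Qed.

(* The Wronskian is constant (its derivative vanishes by the system) and
   tends to 0, so it vanishes; then A2 / A1 is constant, and so is f2 / f1. *)
Lemma system_proportional :
  (forall d, d < 0 -> 0 < A1 d) -> exists lam, forall d, d < 0 -> f2 d = lam * f1 d.
Proof.
  intros Hpos.
  set (W := fun d => A1 d * B2 d - A2 d * B1 d).
  assert (W_der : forall d, d < 0 -> is_derive W d 0).
  { intros d Hd. unfold W. eapply d_val.
    - apply d_minus; apply d_mul.
      + apply (sys_A_der _ _ _ S1 d Hd).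
      + apply (sys_B_der _ _ _ S2 d Hd).
      + apply (sys_A_der _ _ _ S2 d Hd).
      + apply (sys_B_der _ _ _ S1 d Hd).
    - rewrite (sys_eq _ _ _ S1 d Hd), (sys_eq _ _ _ S2 d Hd), (exp_m1 d), (exp_2 d).
      pose proof (exp_pos (1 * d + 0)). field. lra. }
  assert (W_zero : forall d, d < 0 -> W d = 0).
  { assert (E : W (-1) = 0).
    { eapply lim_minf_unique; [|apply wronskian_lim].
      apply (lim_minf_ext (fun _ => W (-1))); [|apply lim_minf_const].
      exists (-1). intros b Hb. symmetry. apply (constant_on_neg W W_der). lra. }
    intros d Hd. rewrite (constant_on_neg W W_der d Hd). auto. }
  set (q := fun d => A2 d / A1 d).
  assert (q_der : forall d, d < 0 -> is_derive q d 0).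
  { intros d Hd. specialize (Hpos d Hd). unfold q. eapply d_val.
    - apply is_derive_div; [apply (sys_A_der _ _ _ S2 d Hd)|apply (sys_A_der _ _ _ S1 d Hd)|lra].
    - assert (HW := W_zero d Hd). unfold W in HW.
      rewrite (sys_eq _ _ _ S1 d Hd), (sys_eq _ _ _ S2 d Hd).
      replace ((exp (1 * d + 0) * A2 d + exp (2 * d + 0) * B2 d) * A1 d -
               A2 d * (exp (1 * d + 0) * A1 d + exp (2 * d + 0) * B1 d))
        with (exp (2 * d + 0) * (A1 d * B2 d - A2 d * B1 d)) by ring.
      rewrite HW. field. lra. }
  exists (q (-1)). intros d Hd. rewrite <- (constant_on_neg q q_der d Hd). unfold q.
  assert (HW := W_zero d Hd). unfold W in HW. specialize (Hpos d Hd).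
  rewrite (sys_eq _ _ _ S1 d Hd), (sys_eq _ _ _ S2 d Hd).
  apply (Rmult_eq_reg_r (A1 d)); [|lra]. field_simplify; [|lra].
  transitivity (exp (1 * d + 0) * A2 d * A1 d + exp (2 * d + 0) * (A1 d * B2 d)); [ring|].
  replace (A1 d * B2 d) with (A2 d * B1 d) by lra. ring.
Qed.

(* If moreover A1 > 0, then f1(0) > 0, and equal values at 0 force f1 = f2. *)
Lemma system_agree_of_pos : (forall d, d < 0 -> 0 < A1 d) -> Cont f1 -> Cont f2 ->
  f1 0 = f2 0 -> forall d, d < 0 -> f2 d = f1 d.
Proof.
  intros Hp C1 C2 E0.
  destruct system_proportional as [lam Hlam]; auto.
  assert (A1_mono : forall d, -1 <= d -> d < 0 -> A1 (-1) <= A1 d).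
  { intros d H1 H2. enough (- A1 d <= - A1 (-1)) by lra.
    apply (nonincreasing_on_neg (fun t => - A1 t) (fun t => - f1 t)); auto.
    - intros t Ht. apply d_opp, (sys_A_der _ _ _ S1 t Ht).
    - intros t Ht. pose proof (sys_f_ge0 _ _ _ S1 t Ht). lra. }
  assert (f1_pos : 0 < f1 0).
  { apply Rlt_le_trans with (exp (-1) * A1 (-1)).
    { pose proof (Hp (-1) ltac:(lra)). pose proof (exp_pos (-1)). nra. }
    apply cont_left_ge; auto. intros d Hd. rewrite (sys_eq _ _ _ S1 d ltac:(lra)).
    pose proof (A1_mono d ltac:(lra) ltac:(lra)). pose proof (Hp (-1) ltac:(lra)).
    pose proof (sys_B_ge0 _ _ _ S1 d ltac:(lra)).
    assert (exp (-1) <= exp (1 * d + 0)) by (apply exp_le_mono; lra).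
    pose proof (exp_pos (-1)). pose proof (exp_pos (2 * d + 0)).
    assert (exp (-1) * A1 (-1) <= exp (1 * d + 0) * A1 d) by (apply Rmult_le_compat; lra).
    assert (0 <= exp (2 * d + 0) * B1 d) by (apply Rmult_le_pos; lra). lra. }
  assert (E1 : f2 0 = lam * f1 0).
  { apply (cont_left_eq f2 (fun t => lam * f1 t)); auto.
    - apply Cont_mul; auto. apply Cont_cst.
    - intros d Hd. apply Hlam. lra. }
  assert (lam = 1) by (rewrite <- E0 in E1; apply (Rmult_eq_reg_r (f1 0)); lra).
  intros d Hd. rewrite Hlam; auto. subst; ring.
Qed.

End TwoSolutions.

(* Two continuous solutions of the system with the same value at 0 coincide:
   either one of them has A > 0, or both vanish identically. *)
Lemma system_unique f1 A1 B1 f2 A2 B2 :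
  half_line_system f1 A1 B1 -> half_line_system f2 A2 B2 -> Cont f1 -> Cont f2 ->
  f1 0 = f2 0 -> forall d, d < 0 -> f2 d = f1 d.
Proof.
  intros S1 S2 C1 C2 E0.
  destruct (system_dichotomy f1 A1 B1 S1) as [P1|Z1];
    [apply (system_agree_of_pos f1 A1 B1 f2 A2 B2); auto|].
  destruct (system_dichotomy f2 A2 B2 S2) as [P2|Z2].
  - intros d Hd. symmetry. apply (system_agree_of_pos f2 A2 B2 f1 A1 B1); auto.
  - intros d Hd. rewrite Z1, Z2; auto.
Qed.

(** * Symmetry of the stationary density *)

Lemma lower_tail_inner h L0 d : Cont h -> (forall x, 0 <= h x) ->
  (forall a, a <= 0 -> RInt h a 0 <= L0) -> d <= 0 -> 0 <= lower_tail h L0 d <= L0.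
Proof.
  intros Hh Hp Hb Hd. unfold lower_tail. rewrite (RInt_swap h 0 d Hh).
  pose proof (Hb d Hd). pose proof (RInt_ge0 h d 0 Hh Hd Hp). lra.
Qed.

Lemma upper_tail_inner h L0 d : Cont h -> (forall x, 0 <= h x) ->
  (forall b, 0 <= b -> RInt h 0 b <= L0) -> 0 <= d -> 0 <= upper_tail h L0 d <= L0.
Proof.
  intros Hh Hp Hb Hd. unfold upper_tail.
  pose proof (Hb d Hd). pose proof (RInt_ge0 h 0 d Hh Hd Hp). lra.
Qed.

Lemma tail_pinf_ge0 h L0 : Cont h -> (forall x, 0 <= h x) ->
  lim_pinf (fun b => RInt h 0 b) L0 -> 0 <= L0.
Proof. intros Hh Hp HL. apply (lim_pinf_ge _ L0 0 0 HL). intros; apply RInt_ge0; auto. Qed.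

Lemma tail_minf_ge0 h L0 : Cont h -> (forall x, 0 <= h x) ->
  lim_minf (fun a => RInt h a 0) L0 -> 0 <= L0.
Proof. intros Hh Hp HL. apply (lim_minf_ge _ L0 0 0 HL). intros; apply RInt_ge0; auto. Qed.

Section Symmetry.
Variable rho : R -> R.
Hypothesis rho_cont : Cont rho.
Hypothesis rho_ge0 : forall x, 0 <= rho x.
Hypothesis rho_mass : is_int_R rho 1.
Hypothesis rho_stat : stationary_density rho.
Variables A0 B0 C0 D0 : R.
Hypothesis A0_lim : lim_minf (fun a => RInt rho a 0) A0.
Hypothesis A0_bound : (forall a, a <= 0 -> RInt rho a 0 <= A0) /\ A0 <= 1.
Hypothesis B0_lim : lim_pinf (fun b => RInt (fun t => rho t * exp (-1 * t + 0)) 0 b) B0.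
Hypothesis B0_le1 : B0 <= 1.
Hypothesis C0_lim : lim_minf (fun a => RInt (fun t => rho t * exp (1 * t + 0)) a 0) C0.
Hypothesis C0_le1 : C0 <= 1.
Hypothesis D0_lim : lim_pinf (fun b => RInt rho 0 b) D0.
Hypothesis D0_bound : (forall b, 0 <= b -> RInt rho 0 b <= D0) /\ D0 <= 1.

Lemma rho_system : half_line_system rho (tailA rho A0) (tailB rho B0).
Proof.
  destruct A0_bound as [A0_ub A0_le1].
  assert (Hexp : Cont (fun t => rho t * exp (-1 * t + 0))) by (apply Cont_mul_expl; auto).
  assert (B0_ge0 : 0 <= B0) by (apply (tail_pinf_ge0 _ B0 Hexp); auto using rho_exp_ge0).
  split; intros.
  - apply lower_tail_der; auto.
  - apply (upper_tail_der (fun t => rho t * exp (-1 * t + 0))); auto.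
  - apply (rho_eq_rhs_neg rho rho_cont rho_stat); auto.
  - apply lower_tail_lim; auto.
  - pose proof (lower_tail_inner rho A0 d rho_cont rho_ge0 A0_ub ltac:(lra)). unfold tailA. lra.
  - pose proof (lower_tail_inner rho A0 d rho_cont rho_ge0 A0_ub ltac:(lra)). unfold tailA. lra.
  - unfold tailB, upper_tail. rewrite (RInt_swap _ 0 d Hexp).
    pose proof (RInt_ge0 _ d 0 Hexp ltac:(lra) (rho_exp_ge0 rho rho_ge0 (-1))). lra.
  - unfold tailB, upper_tail. rewrite (RInt_swap _ 0 d Hexp).
    enough (RInt (fun t => rho t * exp (-1 * t + 0)) d 0 <= exp (-1 * d + 0)) by lra.
    apply RInt_rho_exp_bound; auto; [lra|left; apply exp_pos|].
    intros x Hx. apply exp_le_mono. lra.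
  - auto.
Qed.

(* d |-> rho (-d) solves it with A(d) = int_{-d}^{+oo} rho and
   B(d) = int_{-oo}^{-d} rho e^t, by the equation for rho on [0, +oo). *)
Lemma reflection_system :
  half_line_system (fun t => rho (- t)) (fun t => tailD rho D0 (- t)) (fun t => tailC rho C0 (- t)).
Proof.
  destruct D0_bound as [D0_ub D0_le1].
  assert (Hexp : Cont (fun t => rho t * exp (1 * t + 0))) by (apply Cont_mul_expl; auto).
  assert (C0_ge0 : 0 <= C0) by (apply (tail_minf_ge0 _ C0 Hexp); auto using rho_exp_ge0).
  split; intros.
  - apply (d_ext (fun t => tailD rho D0 (-1 * t + 0))); [intros; f_equal; ring|].
    eapply d_val; [apply (d_comp (tailD rho D0) (fun t => -1 * t + 0));
                   [apply upper_tail_der; auto|apply d_lin]|].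
    replace (-1 * d + 0) with (- d) by ring. ring.
  - apply (d_ext (fun t => tailC rho C0 (-1 * t + 0))); [intros; f_equal; ring|].
    eapply d_val; [apply (d_comp (tailC rho C0) (fun t => -1 * t + 0));
                   [apply (lower_tail_der (fun t => rho t * exp (1 * t + 0))); auto|apply d_lin]|].
    replace (1 * (-1 * d + 0) + 0) with (-1 * d + 0) by ring.
    replace (-1 * d + 0) with (- d) by ring. ring.
  - rewrite (rho_eq_rhs_nonneg rho rho_cont rho_stat C0 D0) by (auto; lra). unfold rhs_pos.
    replace (-2 * - d + 0) with (2 * d + 0) by ring. replace (-1 * - d + 0) with (1 * d + 0) by ring.
    ring.
  - apply lim_minf_of_pinf.
    apply (lim_pinf_ext (tailD rho D0)); [exists 0; intros; f_equal; ring|].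
    apply upper_tail_lim; auto.
  - pose proof (upper_tail_inner rho D0 (- d) rho_cont rho_ge0 D0_ub ltac:(lra)). unfold tailD. lra.
  - pose proof (upper_tail_inner rho D0 (- d) rho_cont rho_ge0 D0_ub ltac:(lra)). unfold tailD. lra.
  - unfold tailC, lower_tail.
    pose proof (RInt_ge0 _ 0 (- d) Hexp ltac:(lra) (rho_exp_ge0 rho rho_ge0 1)). lra.
  - unfold tailC, lower_tail.
    enough (RInt (fun t => rho t * exp (1 * t + 0)) 0 (- d) <= exp (-1 * d + 0)) by lra.
    apply RInt_rho_exp_bound; auto; [lra|left; apply exp_pos|].
    intros x Hx. apply exp_le_mono. lra.
  - auto.
Qed.

(* Part (ii): both solve the same system and agree at 0, hence coincide. *)
Lemma rho_even d : rho d = rho (- d).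
Proof.
  assert (Cont_refl : Cont (fun t => rho (- t))).
  { apply (Cont_ext (fun t => rho (-1 * t + 0))); [intros; f_equal; ring|].
    apply Cont_compl; auto. }
  assert (Agree := system_unique _ _ _ _ _ _ rho_system reflection_system rho_cont Cont_refl).
  destruct (Rtotal_order d 0) as [Hd|[->|Hd]].
  - symmetry. apply Agree; auto. f_equal. ring.
  - f_equal. ring.
  - replace d with (- - d) at 1 by ring. apply Agree; [f_equal; ring|lra].
Qed.

End Symmetry.

Theorem mainTheorem6 (rho : R -> R)
  (Hcont : continuity rho)
  (Hdens : prob_density rho)
  (Hstat : stationary_density rho) :
  (forall d, d < 0 ->
     exists I1 I2,
       is_int_to rho d I1 /\
       is_int_from (fun delta => rho delta * exp (- delta)) d I2 /\
       rho d = exp d * I1 + exp (2 * d) * I2) /\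
  (forall d, 0 <= d ->
     exists I1 I2,
       is_int_to (fun delta => rho delta * exp delta) d I1 /\
       is_int_from rho d I2 /\
       rho d = exp (- (2 * d)) * I1 + exp (- d) * I2) /\
  (forall d, rho d = rho (- d)).
Proof.
  destruct Hdens as [Hpos Hmass].
  assert (Hc := Cont_of_continuity rho Hcont).
  destruct (tail_rho_minf rho Hc Hpos Hmass) as [A0 [HA0 [HA0b HA01]]].
  destruct (tail_rho_exp_pinf rho Hc Hpos Hmass) as [B0 [HB0 [_ HB01]]].
  destruct (tail_rho_exp_minf rho Hc Hpos Hmass) as [C0 [HC0 [_ HC01]]].
  destruct (tail_rho_pinf rho Hc Hpos Hmass) as [D0 [HD0 [HD0b HD01]]].
  split; [|split].
  - apply (integral_equation_neg rho Hc Hstat A0 B0); auto.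
  - apply (integral_equation_pos rho Hc Hstat C0 D0); auto.
  - intros d. apply (rho_even rho Hc Hpos Hmass Hstat A0 B0 C0 D0); auto.
Qed.
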